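(* Let $(b,c)$ be a connected weighted graph over $X$ with $\sum_{x\in X}c(x)<\infty$ and $\sum_{x,y\in X,\ b(x,y)>0}\frac1{b(x,y)}<\infty$. Then $(b,c)$ is canonically compactifiable, the completions $\overline X^d$ and $\overline X^\varrho$ are compact, and the unique continuous map $\iota:\overline X^d\to\overline X^\varrho$ extending the identity on $X$ is a homeomorphism. Moreover, $\overline X^\varrho$ and $K$ are homeomorphic via the unique continuous map $\overline X^\varrho\to K$ extending the embedding $x\mapsto\delta_x$ of $X$ into $K$.
   Context: Let $X$ be a countably infinite set. A weighted graph $(b,c)$ over $X$ consists of a symmetric $b:X\times X\to[0,\infty)$ with $b(x,x)=0$ and $\sum_y b(x,y)<\infty$ for all $x$, and $c:X\to[0,\infty)$. A path is a finite sequence $(x_0,\dots,x_n)$ of pairwise distinct vertices with $b(x_{i-1},x_i)>0$; connected means any two distinct vertices are joined by a path. Let $\widetilde Q(f)=\frac12\sum_{x,y}b(x,y)|f(x)-f(y)|^2+\sum_x c(x)|f(x)|^2$ and $\widetilde D=\{f:\widetilde Q(f)<\infty\}$; the graph is canonically compactifiable if $\widetilde D\subseteq\ell^\infty(X)$. Metrics: $d(x,y)=\inf\{\sum_{i=1}^n1/b(x_{i-1},x_i):(x_0,\dots,x_n)\text{ a path from }x\text{ to }y\}$, and $\varrho(x,y)=\sup\{|f(x)-f(y)|:f\in\widetilde D,\ \widetilde Q(f)\le1\}$; $\overline X^d$, $\overline X^\varrho$ denote the metric completions. For a canonically compactifiable graph, let $\mathcal A$ be the sup-norm closure of $\widetilde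 D$ in $\ell^\infty(X)$, $\mathcal A^+$ the smallest $C^*$-subalgebra of $\ell^\infty(X)$ containing $\mathcal A$ and the constant $1$, and $K$ the set of characters (nonzero multiplicative linear functionals) of $\mathcal A^+$ with the weak-$*$ topology; $X$ embeds in $K$ via $x\mapsto\delta_x$, $\delta_x(f)=f(x)$. *)

From Stdlib Require Import Reals Lra List Classical ClassicalEpsilon.
Open Scope R_scope.
Set Implicit Arguments.

Definition sup_or_zero (E : R -> Prop) : R :=
  match excluded_middle_informative (exists r, is_lub E r) with
  | left H => proj1_sig (constructive_indefinite_description _ H)
  | right _ => 0
  end.
Definition inf_or_zero (E : R -> Prop) : R := - sup_or_zero (fun t => E (- t)).
Definition lim_or_zero (u : nat -> R) : R :=
  match excluded_middle_informative (exists l, Un_cv u l) with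
  | left H => proj1_sig (constructive_indefinite_description _ H)
  | right _ => 0
  end.

Fixpoint fsum {T : Type} (g : T -> R) (l : list T) : R :=
  match l with nil => 0 | x :: l' => g x + fsum g l' end.
(* sum_{t in T} g t < infinity (g nonnegative): finite partial sums bounded *)
Definition Summable {T : Type} (g : T -> R) : Prop :=
  exists M, forall l : list T, NoDup l -> fsum g l <= M.

Definition CountablyInfinite (X : Type) : Prop :=
  exists e : nat -> X, (forall n m, e n = e m -> n = m) /\ (forall x, exists n, e n = x).

Definition WeightedGraph {X : Type} (b : X -> X -> R) (c : X -> R) : Prop :=
  (forall x y, 0 <= b x y) /\ (forall x y, b x y = b y x) /\ (forall x, b x x = 0) /\
  (forall x, Summable (b x)) /\ (forall x, 0 <= c x).

Fixpoint chain {X : Type} (b : X -> X -> R) (x : X) (q : list X) : Prop :=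
  match q with nil => True | y :: q' => 0 < b x y /\ chain b y q' end.
Definition IsPath {X : Type} (b : X -> X -> R) (x : X) (q : list X) (y : X) : Prop :=
  NoDup (x :: q) /\ chain b x q /\ last (x :: q) x = y.
Definition Connected {X : Type} (b : X -> X -> R) : Prop :=
  forall x y, x <> y -> exists q, IsPath b x q y.

Fixpoint pweight {X : Type} (b : X -> X -> R) (x : X) (q : list X) : R :=
  match q with nil => 0 | y :: q' => / b x y + pweight b y q' end.
Definition dmetric {X : Type} (b : X -> X -> R) (x y : X) : R :=
  inf_or_zero (fun t => exists q, IsPath b x q y /\ t = pweight b x q).

Definition C := (R * R)%type.
Definition C0 : C := (0, 0).
Definition C1 : C := (1, 0).
Definition Cadd (z w : C) : C := (fst z + fst w, snd z + snd w).
Definition Csub (z w : C) : C := (fst z - fst w, snd z - snd w).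
Definition Cmul (z w : C) : C :=
  (fst z * fst w - snd z * snd w, fst z * snd w + snd z * fst w).
Definition Cconj (z : C) : C := (fst z, - snd z).
Definition Cnorm2 (z : C) : R := fst z * fst z + snd z * snd z.
Definition Cnorm (z : C) : R := sqrt (Cnorm2 z).

Definition Qpart {X : Type} (b : X -> X -> R) (c : X -> R) (f : X -> C) (l : list X) : R :=
  / 2 * fsum (fun x => fsum (fun y => b x y * Cnorm2 (Csub (f x) (f y))) l) l
  + fsum (fun x => c x * Cnorm2 (f x)) l.
(* Q~(f) <= M  (Q~ is a sum of nonnegative terms, i.e. the sup of its finite partial sums) *)
Definition Qle {X : Type} (b : X -> X -> R) (c : X -> R) (f : X -> C) (M : R) : Prop :=
  forall l : list X, NoDup l -> Qpart b c f l <= M.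
Definition InD {X : Type} (b : X -> X -> R) (c : X -> R) (f : X -> C) : Prop :=
  exists M, Qle b c f M.

Definition Bounded {X : Type} (f : X -> C) : Prop := exists M, forall x, Cnorm (f x) <= M.
Definition CanonicallyCompactifiable {X : Type} (b : X -> X -> R) (c : X -> R) : Prop :=
  forall f, InD b c f -> Bounded f.

Definition rho {X : Type} (b : X -> X -> R) (c : X -> R) (x y : X) : R :=
  sup_or_zero (fun t => exists f, Qle b c f 1 /\ t = Cnorm (Csub (f x) (f y))).

Definition Cauchy {X : Type} (dist : X -> X -> R) (s : nat -> X) : Prop :=
  forall eps, 0 < eps -> exists N, forall n m, (N <= n)%nat -> (N <= m)%nat -> dist (s n) (s m) < eps.
Definition Compl {X : Type} (dist : X -> X -> R) : Type := { s : nat -> X | Cauchy dist s }.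
Definition cdist {X : Type} (dist : X -> X -> R) (s t : Compl dist) : R :=
  lim_or_zero (fun n => dist (proj1_sig s n) (proj1_sig t n)).
Definition ceq {X : Type} (dist : X -> X -> R) (s t : Compl dist) : Prop := cdist s t = 0.
Definition copen {X : Type} (dist : X -> X -> R) (U : Compl dist -> Prop) : Prop :=
  forall s, U s -> exists eps, 0 < eps /\ forall t, cdist s t < eps -> U t.
(* s represents the image of x in the completion *)
Definition IsPointOf {X : Type} (dist : X -> X -> R) (s : Compl dist) (x : X) : Prop :=
  forall n, proj1_sig s n = x.

Definition Compact {T : Type} (opn : (T -> Prop) -> Prop) : Prop :=
  forall (I : Type) (U : I -> T -> Prop), (forall i, opn (U i)) -> (forall t, exists i, U i t) ->
  exists l : list I, forall t, exists i, In i l /\ U i t.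
Definition Continuous {A B : Type} (oA : (A -> Prop) -> Prop) (oB : (B -> Prop) -> Prop)
  (f : A -> B) : Prop := forall V, oB V -> oA (fun a => V (f a)).
(* homeomorphism, up to the equality relations eqA, eqB of the spaces *)
Definition Homeo {A B : Type} (eqA : A -> A -> Prop) (eqB : B -> B -> Prop)
  (oA : (A -> Prop) -> Prop) (oB : (B -> Prop) -> Prop) (f : A -> B) : Prop :=
  Continuous oA oB f /\
  exists g : B -> A, Continuous oB oA g /\ (forall a, eqA (g (f a)) a) /\ (forall b, eqB (f (g b)) b).

Definition InA {X : Type} (b : X -> X -> R) (c : X -> R) (u : X -> C) : Prop :=
  forall eps, 0 < eps -> exists f, InD b c f /\ Bounded f /\ forall x, Cnorm (Csub (u x) (f x)) <= eps.

Definition CstarSub {X : Type} (S : (X -> C) -> Prop) : Prop :=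
  (forall u, S u -> Bounded u) /\
  S (fun _ => C0) /\
  (forall u v, S u -> S v -> S (fun x => Cadd (u x) (v x))) /\
  (forall (z : C) u, S u -> S (fun x => Cmul z (u x))) /\
  (forall u v, S u -> S v -> S (fun x => Cmul (u x) (v x))) /\
  (forall u, S u -> S (fun x => Cconj (u x))) /\
  (forall u, (forall eps, 0 < eps -> exists v, S v /\ forall x, Cnorm (Csub (u x) (v x)) <= eps) -> S u).

(* smallest C*-subalgebra of l^infty(X) containing A and 1 *)
Definition InAplus {X : Type} (b : X -> X -> R) (c : X -> R) (u : X -> C) : Prop :=
  forall S, CstarSub S -> (forall f, InA b c f -> S f) -> S (fun _ => C1) -> S u.

Definition IsCharacter {X : Type} (b : X -> X -> R) (c : X -> R) (phi : (X -> C) -> C) : Prop :=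
  (forall u v, InAplus b c u -> InAplus b c v -> phi (fun x => Cadd (u x) (v x)) = Cadd (phi u) (phi v)) /\
  (forall (z : C) u, InAplus b c u -> phi (fun x => Cmul z (u x)) = Cmul z (phi u)) /\
  (forall u v, InAplus b c u -> InAplus b c v -> phi (fun x => Cmul (u x) (v x)) = Cmul (phi u) (phi v)) /\
  (exists u, InAplus b c u /\ phi u <> C0).

(* characters are functionals on A^+; values outside A^+ are irrelevant *)
Definition Kspace {X : Type} (b : X -> X -> R) (c : X -> R) : Type :=
  { phi : (X -> C) -> C | IsCharacter b c phi }.
Definition Keq {X : Type} (b : X -> X -> R) (c : X -> R) (p q : Kspace b c) : Prop :=
  forall u, InAplus b c u -> proj1_sig p u = proj1_sig q u.
Definition Kopen {X : Type} (b : X -> X -> R) (c : X -> R) (U : Kspace b c -> Prop) : Prop :=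
  forall p, U p -> exists (l : list (X -> C)) eps, 0 < eps /\ (forall a, In a l -> InAplus b c a) /\
    forall q : Kspace b c, (forall a, In a l -> Cnorm (Csub (proj1_sig q a) (proj1_sig p a)) < eps) -> U q.

Definition invb {X : Type} (b : X -> X -> R) (p : X * X) : R :=
  match Rlt_dec 0 (b (fst p) (snd p)) with left _ => / b (fst p) (snd p) | right _ => 0 end.

Arguments copen {X} dist U.
Arguments ceq {X} dist s t.
Arguments cdist {X} dist s t.
Arguments IsPointOf {X} dist s x.
Arguments Keq {X} b c p q.
Arguments Kopen {X} b c U.

(* Let W = sum_{b(x,y)>0} 1/b(x,y).  By Cauchy–Schwarz along a path,
   |f x - f y|^2 <= (sum of 1/b along the path) * Q~(f) <= W Q~(f), so every f of
   finite energy is bounded (canonical compactifiability) and rho^2 <= d.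
   Conversely the cut-off functions min(d(.,z),1) have energy at most W/2 + sum c,
   which gives min(d,1) <= K rho.  Hence d and rho are uniformly equivalent: the
   two completions have the same Cauchy sequences, and the identity on sequences
   is the homeomorphism iota.  Summability of 1/b makes (X,d) totally bounded
   (all but finitely many edges carry arbitrarily small total resistance), so both
   completions are compact.  Finally, every function of A^+ is bounded and
   rho-uniformly continuous, hence extends to the rho-completion; evaluating the
   extension at a point of the completion gives a character, and a compactness
   argument (an element of A^+ that is bounded below is invertible) shows every
   character arises this way.  The cut-off functions separate points, which makes
   the resulting map from the completion to K a homeomorphism. *)
From Stdlib Require Import Reals Lra Lia List Classical ClassicalEpsilon FunctionalExtensionality.
Open Scope R_scope.

Lemma fsum_app {T} (g : T -> R) l1 l2 : fsum g (l1 ++ l2) = fsum g l1 + fsum g l2.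
Proof. induction l1; simpl; [lra | rewrite IHl1; lra]. Qed.

Lemma fsum_nonneg {T} (g : T -> R) l : (forall x, 0 <= g x) -> 0 <= fsum g l.
Proof. intros H; induction l; simpl; [lra | specialize (H a); lra]. Qed.

Lemma fsum_plus {T} (f g : T -> R) l : fsum (fun x => f x + g x) l = fsum f l + fsum g l.
Proof. induction l; simpl; [lra | rewrite IHl; lra]. Qed.

Lemma fsum_scal {T} (f : T -> R) k l : fsum (fun x => k * f x) l = k * fsum f l.
Proof. induction l; simpl; [lra | rewrite IHl; lra]. Qed.

Lemma fsum_ext {T} (f g : T -> R) l : (forall x, In x l -> f x = g x) -> fsum f l = fsum g l.
Proof. induction l; simpl; intros H; [lra |]. rewrite H, IHl; auto. Qed.

Lemma fsum_zero {T} (g : T -> R) l : (forall x, In x l -> g x = 0) -> fsum g l = 0.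
Proof. induction l; simpl; intros h; auto. rewrite h, IHl; auto. lra. Qed.

Lemma fsum_le {T} (f g : T -> R) l : (forall x, In x l -> f x <= g x) -> fsum f l <= fsum g l.
Proof.
  induction l; simpl; intros H; [lra |].
  pose proof (H a (or_introl eq_refl)). pose proof (IHl (fun x h => H x (or_intror h))). lra.
Qed.

Lemma fsum_map {T U} (f : U -> T) (g : T -> R) l : fsum g (map f l) = fsum (fun x => g (f x)) l.
Proof. induction l; simpl; [lra | rewrite IHl; lra]. Qed.

Lemma fsum_prod {T U} (g : T -> U -> R) l1 l2 :
  fsum (fun x => fsum (g x) l2) l1 = fsum (fun p => g (fst p) (snd p)) (list_prod l1 l2).
Proof. induction l1; simpl; [lra |]. rewrite fsum_app, fsum_map, IHl1. reflexivity. Qed.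

Lemma NoDup_map_inj {T U} (f : T -> U) l :
  (forall a b, f a = f b -> a = b) -> NoDup l -> NoDup (map f l).
Proof.
  intros hf h; induction h; simpl; constructor; auto.
  intros hin; apply in_map_iff in hin; destruct hin as [y [hy hy2]].
  apply hf in hy; subst; auto.
Qed.

Lemma NoDup_prod {T U} (l1 : list T) (l2 : list U) : NoDup l1 -> NoDup l2 -> NoDup (list_prod l1 l2).
Proof.
  intros H1 H2; induction H1; simpl; [constructor |].
  apply NoDup_app; auto.
  - apply NoDup_map_inj; auto. intros a0 b0 h; inversion h; reflexivity.
  - intros [p q] h1 h2. apply in_map_iff in h1. destruct h1 as [z [hz _]]. inversion hz; subst.
    apply in_prod_iff in h2. tauto.
Qed.

Lemma sup_spec (E : R -> Prop) : (exists x, E x) -> bound E -> is_lub E (sup_or_zero E).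
Proof.
  intros h1 h2. unfold sup_or_zero. destruct excluded_middle_informative as [e | n].
  - exact (proj2_sig (constructive_indefinite_description _ e)).
  - exfalso; apply n. destruct (completeness E h2 h1) as [m hm]; eauto.
Qed.

Lemma sup_ub (E : R -> Prop) e : E e -> (exists B, forall t, E t -> t <= B) -> e <= sup_or_zero E.
Proof. intros h [B hB]. destruct (sup_spec E) as [h1 _]; eauto. exists B; intros t ht; auto. Qed.

Lemma sup_le (E : R -> Prop) B : (exists e, E e) -> (forall t, E t -> t <= B) -> sup_or_zero E <= B.
Proof. intros h hB. destruct (sup_spec E) as [_ h2]; auto. exists B; intros t ht; auto. Qed.

Lemma inf_le (E : R -> Prop) e B : E e -> (forall t, E t -> B <= t) -> inf_or_zero E <= e.
Proof.
  intros h hB. unfold inf_or_zero. cut (- e <= sup_or_zero (fun t => E (- t))); [lra |].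
  apply sup_ub. rewrite Ropp_involutive; auto. exists (- B). intros t ht. specialize (hB _ ht); lra.
Qed.

Lemma le_inf (E : R -> Prop) B : (exists e, E e) -> (forall t, E t -> B <= t) -> B <= inf_or_zero E.
Proof.
  intros [e h] hB. unfold inf_or_zero. cut (sup_or_zero (fun t => E (- t)) <= - B); [lra |].
  apply sup_le. exists (- e); rewrite Ropp_involutive; auto. intros t ht. specialize (hB _ ht); lra.
Qed.

Lemma lim_eq u l : Un_cv u l -> lim_or_zero u = l.
Proof.
  intros h. unfold lim_or_zero. destruct excluded_middle_informative as [e | n].
  - apply (UL_sequence u); auto. exact (proj2_sig (constructive_indefinite_description _ e)).
  - exfalso; eauto.
Qed.

Lemma cv_const a : Un_cv (fun _ => a) a.
Proof. intros e he; exists 0%nat; intros; unfold R_dist; rewrite Rminus_diag, Rabs_R0; lra. Qed.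

Lemma cv_le_ev u l e : Un_cv u l -> (exists N, forall n, (N <= n)%nat -> u n <= e) -> l <= e.
Proof.
  intros h [N hN]. apply Rnot_lt_le; intros hl.
  destruct (h (l - e)) as [N2 hN2]; [lra |].
  specialize (hN2 (max N N2) (Nat.le_max_r _ _)). specialize (hN (max N N2) (Nat.le_max_l _ _)).
  unfold R_dist in hN2. apply Rabs_def2 in hN2. lra.
Qed.

Lemma cv_ge_ev u l e : Un_cv u l -> (exists N, forall n, (N <= n)%nat -> e <= u n) -> e <= l.
Proof.
  intros h [N hN]. apply Rnot_lt_le; intros hl.
  destruct (h (e - l)) as [N2 hN2]; [lra |].
  specialize (hN2 (max N N2) (Nat.le_max_r _ _)). specialize (hN (max N N2) (Nat.le_max_l _ _)).
  unfold R_dist in hN2. apply Rabs_def2 in hN2. lra.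
Qed.

Lemma cv_lip u l (F : R -> R) :
  Un_cv u l -> (forall a b, Rabs (F a - F b) <= Rabs (a - b)) -> Un_cv (fun n => F (u n)) (F l).
Proof.
  intros h hF e he. destruct (h e he) as [N hN]. exists N; intros n hn.
  unfold R_dist in *. specialize (hN n hn). specialize (hF (u n) l). lra.
Qed.

Lemma cv_opp u l : Un_cv u l -> Un_cv (fun n => - u n) (- l).
Proof.
  intros h. apply (cv_lip u l (fun x => - x)); auto. intros a b.
  replace (- a - - b) with (- (a - b)) by ring. rewrite Rabs_Ropp; lra.
Qed.

Lemma cv_minus u v l m : Un_cv u l -> Un_cv v m -> Un_cv (fun n => u n - v n) (l - m).
Proof. intros h1 h2. apply CV_plus; auto. apply cv_opp; auto. Qed.

Lemma cv_ext u v l : (forall n, u n = v n) -> Un_cv u l -> Un_cv v l.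
Proof. intros h h2 e he. destruct (h2 e he) as [N hN]; exists N; intros n hn; rewrite <- h; auto. Qed.

Lemma cv_le_cv u v l m : Un_cv u l -> Un_cv v m -> (forall n, u n <= v n) -> l <= m.
Proof.
  intros hu hv h. apply Rge_le, Rminus_ge, Rle_ge.
  apply (cv_ge_ev (fun n => v n - u n)); [apply cv_minus; auto |].
  exists 0%nat; intros n _; specialize (h n); lra.
Qed.

Lemma Rsmall_eq0 a : 0 <= a -> (forall e, 0 < e -> a <= e) -> a = 0.
Proof.
  intros h1 h2. destruct (Rle_lt_or_eq_dec 0 a h1) as [h | h]; auto. specialize (h2 (a / 2)); lra.
Qed.

Lemma Rmin1_lip a b : Rabs (Rmin a 1 - Rmin b 1) <= Rabs (a - b).
Proof. unfold Rmin; repeat destruct Rle_dec; unfold Rabs; repeat destruct Rcase_abs; lra. Qed.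

Lemma Cnorm2_nonneg z : 0 <= Cnorm2 z.
Proof. destruct z; unfold Cnorm2; simpl; nra. Qed.

Lemma Cnorm_nonneg z : 0 <= Cnorm z.
Proof. apply sqrt_pos. Qed.

Lemma Cnorm_sq z : Cnorm z * Cnorm z = Cnorm2 z.
Proof. apply sqrt_sqrt, Cnorm2_nonneg. Qed.

Lemma sqrt_le_of x y : 0 <= y -> x <= y * y -> sqrt x <= y.
Proof. intros h1 h2. rewrite <- (sqrt_square y h1). apply sqrt_le_1_alt; auto. Qed.

Lemma le_sqrt_of x y : 0 <= y -> y * y <= x -> y <= sqrt x.
Proof. intros h1 h2. rewrite <- (sqrt_square y h1). apply sqrt_le_1_alt; auto. Qed.

Lemma Cnorm_ge_sq z e : 0 <= e -> Cnorm z <= e -> Cnorm2 z <= e * e.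
Proof. intros h1 h2. rewrite <- Cnorm_sq. pose proof (Cnorm_nonneg z). nra. Qed.

Lemma two_sqrt_le t P Q : 0 <= t -> 0 <= P -> 0 <= Q -> t * t <= P * Q -> 2 * t <= P + Q.
Proof.
  intros. destruct (Rle_lt_dec (2 * t) (P + Q)); auto.
  pose proof (Rle_0_sqr (P - Q)) as hsq; unfold Rsqr in hsq.
  assert (0 < (2 * t - (P + Q)) * (2 * t + (P + Q))) by (apply Rmult_lt_0_compat; lra). nra.
Qed.

Lemma Cnorm_add z w : Cnorm (Cadd z w) <= Cnorm z + Cnorm w.
Proof.
  apply sqrt_le_of. pose proof (Cnorm_nonneg z); pose proof (Cnorm_nonneg w); lra.
  destruct z as [a1 a2], w as [b1 b2]. unfold Cnorm, Cnorm2, Cadd; simpl.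
  set (P := a1 * a1 + a2 * a2). set (Q := b1 * b1 + b2 * b2).
  assert (hP : 0 <= P) by (unfold P; nra). assert (hQ : 0 <= Q) by (unfold Q; nra).
  (* Cauchy–Schwarz, via Lagrange's identity *)
  assert (cs : a1 * b1 + a2 * b2 <= sqrt P * sqrt Q).
  { rewrite <- sqrt_mult; auto. apply Rle_trans with (Rabs (a1 * b1 + a2 * b2)); [apply Rle_abs |].
    apply le_sqrt_of; [apply Rabs_pos |]. rewrite <- Rabs_mult, Rabs_right by (apply Rle_ge, Rle_0_sqr).
    assert (P * Q = (a1 * b1 + a2 * b2) * (a1 * b1 + a2 * b2) + (a1 * b2 - a2 * b1) * (a1 * b2 - a2 * b1))
      by (unfold P, Q; ring).
    pose proof (Rle_0_sqr (a1 * b2 - a2 * b1)); unfold Rsqr in *. lra. }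
  assert (sqrt P * sqrt P = P) by (apply sqrt_sqrt; auto).
  assert (sqrt Q * sqrt Q = Q) by (apply sqrt_sqrt; auto). unfold P, Q in *. nra.
Qed.

Lemma Cnorm_tri a b c : Cnorm (Csub a c) <= Cnorm (Csub a b) + Cnorm (Csub b c).
Proof.
  replace (Csub a c) with (Cadd (Csub a b) (Csub b c)) by (destruct a, b, c; unfold Csub, Cadd; simpl; f_equal; ring).
  apply Cnorm_add.
Qed.

Lemma Cnorm_le_add z w : Cnorm z <= Cnorm w + Cnorm (Csub z w).
Proof.
  replace z with (Cadd w (Csub z w)) at 1 by (destruct z, w; unfold Cadd, Csub; simpl; f_equal; ring).
  apply Cnorm_add.
Qed.

Lemma Cnorm2_sym a b : Cnorm2 (Csub a b) = Cnorm2 (Csub b a).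
Proof. destruct a, b; unfold Cnorm2, Csub; simpl; ring. Qed.

Lemma Cnorm_sym a b : Cnorm (Csub a b) = Cnorm (Csub b a).
Proof. unfold Cnorm; rewrite Cnorm2_sym; auto. Qed.

Lemma Cnorm_mul z w : Cnorm (Cmul z w) = Cnorm z * Cnorm w.
Proof.
  unfold Cnorm. replace (Cnorm2 (Cmul z w)) with (Cnorm2 z * Cnorm2 w)
    by (destruct z, w; unfold Cnorm2, Cmul; simpl; ring).
  apply sqrt_mult; apply Cnorm2_nonneg.
Qed.

Lemma Cnorm_real a : Cnorm (a, 0) = Rabs a.
Proof. unfold Cnorm, Cnorm2; simpl. rewrite <- sqrt_Rsqr_abs. unfold Rsqr. f_equal; ring. Qed.

Lemma Cnorm_conj z : Cnorm (Cconj z) = Cnorm z.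
Proof. destruct z; unfold Cnorm, Cnorm2, Cconj; simpl; f_equal; ring. Qed.

Lemma Cnorm_fst z : Rabs (fst z) <= Cnorm z.
Proof.
  destruct z as [a b]; unfold Cnorm, Cnorm2; simpl. apply le_sqrt_of; [apply Rabs_pos |].
  rewrite <- Rabs_mult, Rabs_right by (apply Rle_ge, Rle_0_sqr). nra.
Qed.

Lemma Cnorm_snd z : Rabs (snd z) <= Cnorm z.
Proof.
  destruct z as [a b]; unfold Cnorm, Cnorm2; simpl. apply le_sqrt_of; [apply Rabs_pos |].
  rewrite <- Rabs_mult, Rabs_right by (apply Rle_ge, Rle_0_sqr). nra.
Qed.

Lemma Cnorm_self a : Cnorm (Csub a a) = 0.
Proof.
  destruct a; unfold Cnorm, Cnorm2, Csub; simpl.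
  replace ((r - r) * (r - r) + (r0 - r0) * (r0 - r0)) with 0 by ring. apply sqrt_0.
Qed.

Lemma Cnorm_zero_eq a b : Cnorm (Csub a b) = 0 -> a = b.
Proof.
  intros h. assert (h2 : Cnorm2 (Csub a b) = 0) by (rewrite <- Cnorm_sq, h; ring).
  destruct a as [a1 a2], b as [b1 b2]; unfold Cnorm2, Csub in h2; simpl in h2.
  pose proof (Rle_0_sqr (a1 - b1)); pose proof (Rle_0_sqr (a2 - b2)); unfold Rsqr in *.
  assert (e1 : (a1 - b1) * (a1 - b1) = 0) by lra. assert (e2 : (a2 - b2) * (a2 - b2) = 0) by lra.
  apply Rmult_integral in e1; apply Rmult_integral in e2. f_equal; lra.
Qed.

Lemma Cnorm_small_eq a b : (forall e, 0 < e -> Cnorm (Csub a b) <= e) -> a = b.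
Proof. intros h; apply Cnorm_zero_eq, Rsmall_eq0; auto. apply Cnorm_nonneg. Qed.

Lemma Cmul_cancel a z : a <> C0 -> a = Cmul a z -> z = C1.
Proof.
  destruct a as [a1 a2], z as [z1 z2]; unfold Cmul, C0, C1; simpl. intros hn h. injection h as h1 h2.
  assert (hpos : 0 < a1 * a1 + a2 * a2).
  { destruct (Req_dec a1 0) as [e1 | n1].
    - destruct (Req_dec a2 0) as [e2 | n2]; [exfalso; apply hn; subst; auto |].
      pose proof (Rsqr_pos_lt a2 n2); pose proof (Rle_0_sqr a1); unfold Rsqr in *; lra.
    - pose proof (Rsqr_pos_lt a1 n1); pose proof (Rle_0_sqr a2); unfold Rsqr in *; lra. }
  assert (e1 : (a1 * a1 + a2 * a2) * (z1 - 1) = a1 * (a1 * z1 - a2 * z2 - a1) + a2 * (a1 * z2 + a2 * z1 - a2))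
    by ring.
  assert (e2 : (a1 * a1 + a2 * a2) * z2 = a1 * (a1 * z2 + a2 * z1 - a2) - a2 * (a1 * z1 - a2 * z2 - a1))
    by ring.
  replace (a1 * z1 - a2 * z2 - a1) with 0 in e1, e2 by lra.
  replace (a1 * z2 + a2 * z1 - a2) with 0 in e1, e2 by lra.
  rewrite Rmult_0_r, Rmult_0_r, Rplus_0_r in e1. rewrite Rmult_0_r, Rmult_0_r, Rminus_0_r in e2.
  apply Rmult_integral in e1; apply Rmult_integral in e2. f_equal; lra.
Qed.

Definition Cv (w : nat -> C) (L : C) :=
  Un_cv (fun n => fst (w n)) (fst L) /\ Un_cv (fun n => snd (w n)) (snd L).
Definition Clim (w : nat -> C) : C :=
  (lim_or_zero (fun n => fst (w n)), lim_or_zero (fun n => snd (w n))).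

Lemma Cv_Clim w L : Cv w L -> Clim w = L.
Proof. intros [h1 h2]. unfold Clim. rewrite (lim_eq _ _ h1), (lim_eq _ _ h2). destruct L; auto. Qed.

Lemma Cv_add w v L M : Cv w L -> Cv v M -> Cv (fun n => Cadd (w n) (v n)) (Cadd L M).
Proof. intros [h1 h2] [h3 h4]; split; simpl; apply CV_plus; auto. Qed.

Lemma Cv_sub w v L M : Cv w L -> Cv v M -> Cv (fun n => Csub (w n) (v n)) (Csub L M).
Proof. intros [h1 h2] [h3 h4]; split; simpl; apply cv_minus; auto. Qed.

Lemma Cv_mul w v L M : Cv w L -> Cv v M -> Cv (fun n => Cmul (w n) (v n)) (Cmul L M).
Proof.
  intros [h1 h2] [h3 h4]; split; simpl.
  - apply cv_minus; apply CV_mult; auto.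
  - apply CV_plus; apply CV_mult; auto.
Qed.

Lemma Cv_const z : Cv (fun _ => z) z.
Proof. split; apply cv_const. Qed.

Lemma Cv_ext w v L : (forall n, w n = v n) -> Cv w L -> Cv v L.
Proof.
  intros h [h1 h2]; split; [apply (cv_ext (fun n => fst (w n))) | apply (cv_ext (fun n => snd (w n)))];
    auto; intros n; rewrite h; auto.
Qed.

Lemma Cv_norm_le w L e : Cv w L -> 0 <= e ->
  (exists N, forall n, (N <= n)%nat -> Cnorm (w n) <= e) -> Cnorm L <= e.
Proof.
  intros [h1 h2] he [N hN]. apply sqrt_le_of; auto.
  assert (hc : Un_cv (fun n => Cnorm2 (w n)) (Cnorm2 L)) by (unfold Cnorm2; apply CV_plus; apply CV_mult; auto).
  apply (cv_le_ev _ _ _ hc). exists N; intros n hn. apply Cnorm_ge_sq; auto.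
Qed.

(** * Metric completions *)

Record IsMetric {X : Type} (dist : X -> X -> R) : Prop := {
  metric_nonneg : forall x y, 0 <= dist x y;
  metric_refl : forall x, dist x x = 0;
  metric_sym : forall x y, dist x y = dist y x;
  metric_tri : forall x y z, dist x z <= dist x y + dist y z }.
Arguments metric_nonneg {X dist}.
Arguments metric_refl {X dist}.
Arguments metric_sym {X dist}.
Arguments metric_tri {X dist}.

Section Completion.
Context {X : Type} (dist : X -> X -> R) (Hd : IsMetric dist).

Definition seqdist (s t : nat -> X) : R := lim_or_zero (fun n => dist (s n) (t n)).

Lemma seqdist_cv s t :
  Cauchy dist s -> Cauchy dist t -> Un_cv (fun n => dist (s n) (t n)) (seqdist s t).
Proof.
  intros hs ht. destruct Hd as [_ _ dsym dtri].
  assert (hc : Cauchy_crit (fun n => dist (s n) (t n))).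
  { intros e he. destruct (hs (e / 2)) as [N1 h1]; [lra |]. destruct (ht (e / 2)) as [N2 h2]; [lra |].
    exists (max N1 N2); intros n m hn hm. unfold R_dist.
    specialize (h1 n m ltac:(lia) ltac:(lia)). specialize (h2 n m ltac:(lia) ltac:(lia)).
    pose proof (dtri (s n) (s m) (t n)). pose proof (dtri (s m) (t m) (t n)).
    pose proof (dtri (s m) (s n) (t m)). pose proof (dtri (s n) (t n) (t m)).
    rewrite (dsym (s m) (s n)) in *. rewrite (dsym (t n) (t m)) in *.
    apply Rabs_def1; lra. }
  destruct (R_complete _ hc) as [l hl]. unfold seqdist. rewrite (lim_eq _ l hl); auto.
Qed.

Lemma seqdist_nonneg s t : Cauchy dist s -> Cauchy dist t -> 0 <= seqdist s t.
Proof.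
  intros hs ht. apply (cv_ge_ev _ _ _ (seqdist_cv s t hs ht)).
  exists 0%nat; intros; apply (metric_nonneg Hd).
Qed.

Lemma seqdist_same s t : (forall n, s n = t n) -> seqdist s t = 0.
Proof.
  intros h; apply lim_eq. apply (cv_ext (fun _ => 0)); [| apply cv_const].
  intros n; rewrite h, (metric_refl Hd); auto.
Qed.

Lemma seqdist_sym s t : Cauchy dist s -> Cauchy dist t -> seqdist s t = seqdist t s.
Proof.
  intros hs ht. apply lim_eq. apply (cv_ext (fun n => dist (t n) (s n))).
  intros; apply (metric_sym Hd). apply seqdist_cv; auto.
Qed.

Lemma seqdist_tri s t u :
  Cauchy dist s -> Cauchy dist t -> Cauchy dist u -> seqdist s u <= seqdist s t + seqdist t u.
Proof.
  intros hs ht hu.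
  apply (cv_le_cv (fun n => dist (s n) (u n)) (fun n => dist (s n) (t n) + dist (t n) (u n))).
  apply seqdist_cv; auto. apply CV_plus; apply seqdist_cv; auto. intros; apply (metric_tri Hd).
Qed.

Lemma seqdist_lt_ev s t e : Cauchy dist s -> Cauchy dist t -> seqdist s t < e ->
  exists N, forall n, (N <= n)%nat -> dist (s n) (t n) < e.
Proof.
  intros hs ht h. destruct (seqdist_cv s t hs ht (e - seqdist s t)) as [N hN]; [lra |].
  exists N; intros n hn; specialize (hN n hn); unfold R_dist in hN. apply Rabs_def2 in hN. lra.
Qed.

Lemma seqdist_le_ev s t e : Cauchy dist s -> Cauchy dist t ->
  (exists N, forall n, (N <= n)%nat -> dist (s n) (t n) <= e) -> seqdist s t <= e.
Proof. intros hs ht h. apply (cv_le_ev _ _ _ (seqdist_cv s t hs ht) h). Qed.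

Lemma const_cauchy (x : X) : Cauchy dist (fun _ => x).
Proof. intros e he; exists 0%nat; intros; rewrite (metric_refl Hd); auto. Qed.

Definition embed (x : X) : Compl dist := exist _ (fun _ => x) (const_cauchy x).

Lemma seqdist_density s : Cauchy dist s -> forall e, 0 < e ->
  exists N, forall n, (N <= n)%nat -> seqdist s (fun _ => s n) <= e.
Proof.
  intros hs e he. destruct (hs e he) as [N hN]. exists N; intros n hn.
  apply seqdist_le_ev; auto. apply const_cauchy.
  exists N; intros m hm. left; apply hN; auto.
Qed.

Lemma cdist_nonneg (s t : Compl dist) : 0 <= cdist dist s t.
Proof. apply seqdist_nonneg; apply proj2_sig. Qed.

Lemma cdist_sym (s t : Compl dist) : cdist dist s t = cdist dist t s.
Proof. apply seqdist_sym; apply proj2_sig. Qed.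

Lemma cdist_tri (s t u : Compl dist) : cdist dist s u <= cdist dist s t + cdist dist t u.
Proof. apply seqdist_tri; apply proj2_sig. Qed.

Lemma cdist_self (s : Compl dist) : cdist dist s s = 0.
Proof. apply seqdist_same; auto. Qed.

Lemma cdist_embed x y : cdist dist (embed x) (embed y) = dist x y.
Proof. apply (lim_eq (fun _ => dist x y)), cv_const. Qed.

Lemma cdist_density (s : Compl dist) e : 0 < e ->
  exists N, forall n, (N <= n)%nat -> cdist dist s (embed (proj1_sig s n)) <= e.
Proof. intros he. apply (seqdist_density (proj1_sig s) (proj2_sig s) e he). Qed.

Lemma ball_open (s : Compl dist) r : copen dist (fun t => cdist dist s t < r).
Proof.
  intros t ht. exists (r - cdist dist s t); split; [lra |]. intros t' h'.
  pose proof (cdist_tri s t t'). lra.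
Qed.

(* Suppose an open cover U has no finite subcover.  We choose nested balls of
   radii 2^-k, none finitely covered; their centres form a Cauchy sequence whose
   limit lies in some U i, which then covers a small ball — a contradiction. *)
Section Compactness.
Variable x0 : X.
Hypothesis totally_bounded :
  forall e, 0 < e -> exists F : list X, forall x, exists y, In y F /\ dist x y < e.
Variable I : Type.
Variable U : I -> Compl dist -> Prop.
Hypothesis U_open : forall i, copen dist (U i).
Hypothesis U_cover : forall t, exists i, U i t.

Definition finitely_covered (A : Compl dist -> Prop) : Prop :=
  exists l, forall t, A t -> exists i, In i l /\ U i t.

Definition radius (k : nat) : R := (/ 2) ^ k.

Lemma radius_pos k : 0 < radius k.
Proof. unfold radius; apply pow_lt; lra. Qed.

Lemma radius_S k : radius (S k) = radius k / 2.
Proof. unfold radius; simpl; lra. Qed.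

Lemma radius_mono n m : (n <= m)%nat -> radius m <= radius n.
Proof. induction 1; [lra |]. rewrite radius_S. pose proof (radius_pos m); lra. Qed.

Lemma radius_small e : 0 < e -> exists N, radius N < e.
Proof.
  intros he. destruct (pow_lt_1_zero (/ 2) ltac:(rewrite Rabs_right; lra) e he) as [N hN].
  exists N. specialize (hN N (le_n N)). unfold radius. rewrite Rabs_right in hN; auto.
  apply Rle_ge; left; apply pow_lt; lra.
Qed.

Lemma completion_net e : 0 < e ->
  exists F : list X, forall t : Compl dist, exists y, In y F /\ cdist dist t (embed y) < e.
Proof.
  intros he. destruct (totally_bounded (e / 2)) as [F hF]; [lra |]. exists F; intros t.
  destruct (cdist_density t (e / 4)) as [N hN]; [lra |].
  destruct (hF (proj1_sig t N)) as [y [hy hd]]. exists y; split; auto.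
  pose proof (cdist_tri t (embed (proj1_sig t N)) (embed y)). rewrite cdist_embed in H.
  specialize (hN N (le_n N)). lra.
Qed.

Lemma finitely_covered_union (P : X -> Compl dist -> Prop) (F : list X) :
  (forall y, In y F -> finitely_covered (P y)) ->
  finitely_covered (fun t => exists y, In y F /\ P y t).
Proof.
  induction F as [| a F IH]; intros h.
  - exists nil; intros t [y [[] _]].
  - destruct (h a (or_introl eq_refl)) as [la hla].
    destruct IH as [lr hlr]; [intros y hy; apply h; right; auto |].
    exists (la ++ lr). intros t [y [[-> | hy] hp]].
    + destruct (hla t hp) as [i [hi hu]]; exists i; split; auto; apply in_or_app; auto.
    + destruct (hlr t (ex_intro _ y (conj hy hp))) as [i [hi hu]]; exists i; split; auto; apply in_or_app; auto.
Qed.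

Lemma refine A k : ~ finitely_covered A ->
  exists y, ~ finitely_covered (fun t => A t /\ cdist dist t (embed y) < radius k).
Proof.
  intros hA. destruct (completion_net (radius k) (radius_pos k)) as [F hF].
  apply NNPP; intros hn. apply hA.
  destruct (finitely_covered_union (fun y t => A t /\ cdist dist t (embed y) < radius k) F) as [l hl].
  { intros y _. apply NNPP; intros h2. apply hn; exists y. exact h2. }
  exists l; intros t ht. apply hl. destruct (hF t) as [y [hy hd]]; exists y; auto.
Qed.

Definition next_center (A : Compl dist -> Prop) (k : nat) : X :=
  epsilon (inhabits x0) (fun y => ~ finitely_covered (fun t => A t /\ cdist dist t (embed y) < radius k)).

Fixpoint nested_balls (k : nat) : Compl dist -> Prop :=
  match k with
  | O => fun _ => True
  | S k => fun t => nested_balls k t /\ cdist dist t (embed (next_center (nested_balls k) k)) < radius k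
  end.

Definition centers (k : nat) : X := next_center (nested_balls k) k.

Hypothesis no_finite_subcover : ~ finitely_covered (fun _ => True).

Lemma nested_balls_not_covered k : ~ finitely_covered (nested_balls k).
Proof.
  induction k; simpl; auto.
  apply (epsilon_spec (inhabits x0)
    (fun y => ~ finitely_covered (fun t => nested_balls k t /\ cdist dist t (embed y) < radius k))).
  apply refine; auto.
Qed.

Lemma not_covered_nonempty A : ~ finitely_covered A -> exists t, A t.
Proof. intros h; apply NNPP; intros hn; apply h; exists nil; intros t ht; exfalso; eauto. Qed.

Lemma centers_close k : dist (centers k) (centers (S k)) <= 2 * radius k.
Proof.
  destruct (not_covered_nonempty _ (nested_balls_not_covered (S (S k)))) as [t [[_ h1] h2]].
  fold (centers k) in h1. fold (centers (S k)) in h2. rewrite <- cdist_embed.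
  pose proof (cdist_tri (embed (centers k)) t (embed (centers (S k)))). rewrite cdist_sym in h1.
  rewrite radius_S in h2. pose proof (radius_pos k). lra.
Qed.

Lemma centers_bound n m : (n <= m)%nat -> dist (centers n) (centers m) <= 4 * radius n.
Proof.
  intros h. replace m with (n + (m - n))%nat by lia.
  assert (tele : forall j, dist (centers n) (centers (n + j)) <= 4 * (radius n - radius (n + j))).
  { induction j.
    - rewrite Nat.add_0_r, (metric_refl Hd). lra.
    - replace (n + S j)%nat with (S (n + j)) by lia. pose proof (centers_close (n + j)).
      pose proof (metric_tri Hd (centers n) (centers (n + j)) (centers (S (n + j)))).
      rewrite radius_S. lra. }
  pose proof (tele (m - n)%nat). pose proof (radius_pos (n + (m - n))). lra.
Qed.

Lemma centers_cauchy : Cauchy dist centers.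
Proof.
  intros e he. destruct (radius_small (e / 4)) as [N hN]; [lra |]. exists N; intros n m hn hm.
  destruct (Nat.le_ge_cases n m).
  - pose proof (centers_bound n m H). pose proof (radius_mono N n hn). lra.
  - pose proof (centers_bound m n H). pose proof (radius_mono N m hm). rewrite (metric_sym Hd). lra.
Qed.

Lemma no_finite_subcover_absurd : False.
Proof.
  set (p := exist (Cauchy dist) centers centers_cauchy : Compl dist).
  assert (hp : forall n, cdist dist p (embed (centers n)) <= 4 * radius n).
  { intros n. apply seqdist_le_ev; [apply centers_cauchy | apply (proj2_sig (embed (centers n))) |].
    exists n; intros m hm; simpl. rewrite (metric_sym Hd). apply centers_bound; auto. }
  destruct (U_cover p) as [i hi]. destruct (U_open i p hi) as [e [he hb]].
  destruct (radius_small (e / 5)) as [n hn]; [lra |].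
  apply (nested_balls_not_covered (S n)). exists (i :: nil). intros t [_ ht].
  exists i; split; [left; auto |]. apply hb. fold (centers n) in ht.
  pose proof (cdist_tri p (embed (centers n)) t). rewrite (cdist_sym (embed (centers n)) t) in H.
  pose proof (hp n). lra.
Qed.
End Compactness.

Theorem completion_compact (x0 : X) :
  (forall e, 0 < e -> exists F : list X, forall x, exists y, In y F /\ dist x y < e) ->
  Compact (copen dist).
Proof.
  intros tb I U HU Hcov. apply NNPP; intros hnf.
  apply (no_finite_subcover_absurd x0 tb I U HU Hcov).
  intros [l hl]. apply hnf; exists l; intros t; apply hl; auto.
Qed.

End Completion.

Definition total {T : Type} (g : T -> R) : R :=
  sup_or_zero (fun t => exists L, NoDup L /\ t = fsum g L).

Lemma fsum_le_total {T} (g : T -> R) L : Summable g -> NoDup L -> fsum g L <= total g.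
Proof.
  intros [M hM] h. apply sup_ub. exists L; auto. exists M. intros t [L' [h' ->]]; auto.
Qed.

Lemma total_nonneg {T} (g : T -> R) : Summable g -> 0 <= total g.
Proof. intros h. apply (fsum_le_total g nil h (NoDup_nil _)). Qed.

Lemma summable_tail {T} (g : T -> R) : Summable g -> forall e, 0 < e ->
  exists L, NoDup L /\ forall L', NoDup L' -> (forall p, In p L' -> ~ In p L) -> fsum g L' < e.
Proof.
  intros [M hM] e he.
  set (E := fun t => exists L, NoDup L /\ t = fsum g L).
  assert (hne : exists t, E t) by (exists 0, nil; split; [constructor | auto]).
  assert (hb : forall t, E t -> t <= M) by (intros t [L [h ->]]; auto).
  assert (exists L, NoDup L /\ sup_or_zero E - e < fsum g L) as [L [hL hL2]].
  { apply NNPP; intros hn. assert (sup_or_zero E <= sup_or_zero E - e); [| lra].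
    apply sup_le; auto. intros t [L [h ->]]. apply Rnot_lt_le; intros h2; apply hn; exists L; auto. }
  exists L; split; auto. intros L' h1 h2.
  assert (E (fsum g (L ++ L'))).
  { exists (L ++ L'); split; auto. apply NoDup_app; auto. intros a ha hb'; exact (h2 a hb' ha). }
  pose proof (sup_ub E _ H (ex_intro _ M hb)). rewrite fsum_app in H0. lra.
Qed.

Fixpoint endpoint {X} (x : X) (q : list X) : X :=
  match q with nil => x | y :: q' => endpoint y q' end.

Lemma last_endpoint {X} (x : X) q : last (x :: q) x = endpoint x q.
Proof.
  assert (dflt : forall (y d1 d2 : X) q, last (y :: q) d1 = last (y :: q) d2).
  { intros y d1 d2 q'; revert y; induction q'; intros y; [reflexivity |].
    change (last (a :: q') d1 = last (a :: q') d2); apply IHq'. }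
  revert x; induction q; intros x; [reflexivity |]. simpl endpoint. rewrite <- IHq.
  change (last (a :: q) x = last (a :: q) a). apply dflt.
Qed.

Lemma endpoint_app {X} (x : X) q1 q2 : endpoint x (q1 ++ q2) = endpoint (endpoint x q1) q2.
Proof. revert x; induction q1; intros x; simpl; auto. Qed.

Fixpoint edges {X} (x : X) (q : list X) : list (X * X) :=
  match q with nil => nil | y :: q' => (x, y) :: edges y q' end.

Lemma edges_fst {X} (x : X) q p : In p (edges x q) -> In (fst p) (x :: q).
Proof.
  revert x; induction q; intros x; simpl; [tauto |]. intros [<- | h]; simpl; auto.
  specialize (IHq a h). simpl in IHq. tauto.
Qed.

Lemma edges_nodup {X} (x : X) q : NoDup (x :: q) -> NoDup (edges x q).
Proof.
  revert x; induction q; intros x h; simpl; [constructor |]. inversion h; subst. constructor.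
  - intros hin. apply edges_fst in hin. simpl in hin. auto.
  - apply IHq. inversion H2; subst. constructor; auto.
Qed.

(** * The weighted graph and its path metric d *)

Section WeightedGraph.
Context {X : Type} (b : X -> X -> R).
Hypothesis b_nonneg : forall x y, 0 <= b x y.
Hypothesis b_sym : forall x y, b x y = b y x.
Hypothesis Hconn : Connected b.

Lemma chain_app x q1 q2 : chain b x (q1 ++ q2) <-> chain b x q1 /\ chain b (endpoint x q1) q2.
Proof. revert x; induction q1; intros x; simpl; [tauto |]. rewrite IHq1; tauto. Qed.

Lemma pweight_app x q1 q2 : pweight b x (q1 ++ q2) = pweight b x q1 + pweight b (endpoint x q1) q2.
Proof. revert x; induction q1; intros x; simpl; [lra |]. rewrite IHq1; lra. Qed.

Lemma pweight_nonneg x q : chain b x q -> 0 <= pweight b x q.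
Proof.
  revert x; induction q; intros x h; simpl; [lra |]. destruct h as [h1 h2].
  pose proof (Rinv_0_lt_compat _ h1). pose proof (IHq a h2). lra.
Qed.

Lemma IsPath_endpoint x q y : IsPath b x q y <-> NoDup (x :: q) /\ chain b x q /\ endpoint x q = y.
Proof. unfold IsPath. rewrite last_endpoint. tauto. Qed.

Lemma trivial_path x : IsPath b x nil x.
Proof. apply IsPath_endpoint. repeat split; [constructor; [simpl; auto | constructor]]. Qed.

Lemma walk_suffix z p A x B : chain b z p -> z :: p = A ++ x :: B ->
  chain b x B /\ pweight b x B <= pweight b z p /\ endpoint x B = endpoint z p /\
  (NoDup (z :: p) -> NoDup (x :: B)).
Proof.
  revert z p; induction A as [| a A IH]; intros z p hc he; simpl in he.
  - inversion he; subst. repeat split; auto. lra.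
  - destruct p as [| y p'].
    + injection he as _ he2. destruct A; discriminate.
    + injection he as _ he2. destruct hc as [hb hc]. destruct (IH y p' hc he2) as [h1 [h2 [h3 h4]]].
      split; auto. split. simpl. pose proof (Rinv_0_lt_compat _ hb). lra.
      split; auto. intros hn. apply h4. inversion hn; auto.
Qed.

Lemma walk_to_path q x : chain b x q ->
  exists q', IsPath b x q' (endpoint x q) /\ pweight b x q' <= pweight b x q.
Proof.
  revert x; induction q as [| z q1 IH]; intros x hc.
  - exists nil. split; [apply trivial_path | simpl; lra].
  - destruct hc as [hb hc]. destruct (IH z hc) as [p [hp hw]].
    apply IsPath_endpoint in hp. destruct hp as [hnd [hch hl]]. simpl.
    pose proof (Rinv_0_lt_compat _ hb).
    destruct (classic (In x (z :: p))) as [hin | hnin].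
    + destruct (in_split _ _ hin) as [A [B hAB]].
      destruct (walk_suffix z p A x B hch hAB) as [h1 [h2 [h3 h4]]].
      exists B. split; [apply IsPath_endpoint; split; [auto | split; auto] |]. rewrite h3; auto. lra.
    + exists (z :: p). split; [apply IsPath_endpoint; split; [constructor; auto | split; [split; auto | simpl; auto]] |].
      simpl; lra.
Qed.

Definition path_weights x y t := exists q, IsPath b x q y /\ t = pweight b x q.

Lemma path_weights_nonempty x y : exists t, path_weights x y t.
Proof.
  destruct (classic (x = y)) as [<- | hne].
  - exists 0, nil. split; [apply trivial_path | simpl; auto].
  - destruct (Hconn x y hne) as [q hq]. exists (pweight b x q), q; auto.
Qed.

Lemma path_weights_nonneg x y t : path_weights x y t -> 0 <= t.
Proof. intros [q [hq ->]]. apply IsPath_endpoint in hq. apply pweight_nonneg, hq. Qed.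

Lemma dmetric_le_path x q y : IsPath b x q y -> dmetric b x y <= pweight b x q.
Proof. intros h. apply (inf_le _ _ 0); [exists q; auto | apply path_weights_nonneg]. Qed.

Lemma dmetric_le_walk x q : chain b x q -> dmetric b x (endpoint x q) <= pweight b x q.
Proof.
  intros h. destruct (walk_to_path q x h) as [q' [h1 h2]].
  pose proof (dmetric_le_path _ _ _ h1). lra.
Qed.

Lemma dmetric_edge x y : 0 < b x y -> dmetric b x y <= / b x y.
Proof. intros h. pose proof (dmetric_le_walk x (y :: nil) (conj h I)). simpl in H. lra. Qed.

Lemma walk_rev x q : chain b x q ->
  exists q', chain b (endpoint x q) q' /\ endpoint (endpoint x q) q' = x /\
             pweight b (endpoint x q) q' = pweight b x q.
Proof.
  revert x; induction q as [| z q1 IH]; intros x hc.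
  - exists nil; simpl; repeat split; auto.
  - destruct hc as [hb hc]. destruct (IH z hc) as [r [h1 [h2 h3]]]. simpl.
    exists (r ++ x :: nil). split; [| split].
    + apply chain_app. split; auto. rewrite h2. simpl. rewrite b_sym; auto.
    + rewrite endpoint_app, h2; auto.
    + rewrite pweight_app, h2, h3. simpl. rewrite b_sym. lra.
Qed.

Lemma dmetric_sym_le x y : dmetric b y x <= dmetric b x y.
Proof.
  apply le_inf; [apply path_weights_nonempty |]. intros t [q [hq ->]].
  apply IsPath_endpoint in hq. destruct hq as [_ [hc hl]].
  destruct (walk_rev x q hc) as [r [h1 [h2 h3]]]. pose proof (dmetric_le_walk _ _ h1).
  rewrite h2, hl in H. rewrite hl in h3. lra.
Qed.

(* d is a metric: concatenation of walks gives the triangle inequality. *)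
Lemma dmetric_is_metric : IsMetric (dmetric b).
Proof.
  assert (nonneg : forall x y, 0 <= dmetric b x y).
  { intros; apply le_inf; [apply path_weights_nonempty | apply path_weights_nonneg]. }
  split; auto.
  - intros x. pose proof (nonneg x x). pose proof (dmetric_le_walk x nil I). simpl in H0. lra.
  - intros x y. pose proof (dmetric_sym_le x y); pose proof (dmetric_sym_le y x); lra.
  - intros x y z.
    assert (h : forall t1 t2, path_weights x y t1 -> path_weights y z t2 -> dmetric b x z <= t1 + t2).
    { intros t1 t2 [p1 [h1 ->]] [p2 [h2 ->]]. apply IsPath_endpoint in h1; apply IsPath_endpoint in h2.
      destruct h1 as [_ [c1 l1]], h2 as [_ [c2 l2]].
      assert (hc : chain b x (p1 ++ p2)) by (apply chain_app; rewrite l1; auto).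
      pose proof (dmetric_le_walk _ _ hc). rewrite endpoint_app, l1, l2, pweight_app, l1 in H. auto. }
    assert (h2 : forall t2, path_weights y z t2 -> dmetric b x z - t2 <= dmetric b x y).
    { intros t2 ht2. apply le_inf; [apply path_weights_nonempty |]. intros t1 ht1.
      specialize (h t1 t2 ht1 ht2). lra. }
    assert (dmetric b x z - dmetric b x y <= dmetric b y z).
    { apply le_inf; [apply path_weights_nonempty |]. intros t2 ht2. specialize (h2 t2 ht2). lra. }
    lra.
Qed.

Lemma pweight_edges x q : chain b x q -> pweight b x q = fsum (invb b) (edges x q).
Proof.
  revert x; induction q; intros x h; simpl; auto. destruct h as [h1 h2].
  rewrite IHq; auto. unfold invb; simpl. destruct Rlt_dec; [auto | contradiction].
Qed.

Lemma first_hit (F : list X) q x : chain b x q -> NoDup (x :: q) -> In (endpoint x q) F ->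
  exists y r, In y F /\ IsPath b x r y /\ (forall p, In p (edges x r) -> ~ In (fst p) F) /\ incl r q.
Proof.
  revert x; induction q as [| z q1 IH]; intros x hc hnd hin.
  - exists x, nil. split; [exact hin | split; [apply trivial_path | split; [simpl; tauto | intros a ha; exact ha]]].
  - destruct (classic (In x F)) as [hx | hx].
    + exists x, nil. split; [exact hx | split; [apply trivial_path | split; [simpl; tauto | intros a []]]].
    + destruct hc as [hb hc]. inversion hnd; subst.
      destruct (IH z hc H2 hin) as [y [r [hy [hr [h4 h5]]]]].
      apply IsPath_endpoint in hr. destruct hr as [h1 [h2 h3]].
      exists y, (z :: r). split; auto. split; [| split].
      * apply IsPath_endpoint. split; [| split; [split; auto | simpl; auto]].
        constructor; auto. intros hin2. apply H1.
        destruct hin2 as [-> | hin2]; [left; auto | right; apply h5; auto].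
      * intros p [hp | hp]; [rewrite <- hp; simpl; exact hx | exact (h4 p hp)].
      * intros a [-> | ha]; [left; auto | right; apply h5; auto].
Qed.

(* If sum 1/b < oo then (X, d) is totally bounded: take the finite set F of
   endpoints of the edges carrying all but e of the total resistance; the path
   from any x to a base point, stopped when it first hits F, avoids those edges. *)
Lemma dmetric_totally_bounded (x0 : X) : Summable (invb b) ->
  forall e, 0 < e -> exists F : list X, forall x, exists y, In y F /\ dmetric b x y < e.
Proof.
  intros Hb e he. destruct (summable_tail (invb b) Hb e he) as [L [hL hL2]].
  exists (x0 :: map fst L). intros x.
  destruct (classic (x = x0)) as [-> | hne].
  - exists x0; split; [left; auto |]. rewrite (metric_refl dmetric_is_metric); auto.
  - destruct (Hconn x x0 hne) as [q hq]. apply IsPath_endpoint in hq. destruct hq as [h1 [h2 h3]].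
    destruct (first_hit (x0 :: map fst L) q x h2 h1) as [y [r [hy [hr [hr2 _]]]]].
    { rewrite h3; left; auto. }
    exists y; split; auto. pose proof (dmetric_le_path _ _ _ hr).
    apply IsPath_endpoint in hr. destruct hr as [hr1 [hr2' _]].
    rewrite pweight_edges in H; auto.
    assert (fsum (invb b) (edges x r) < e).
    { apply hL2. apply edges_nodup; auto. intros p hp hpL. apply (hr2 p hp). right. apply in_map; auto. }
    lra.
Qed.

(** ** The energy form and the metric rho *)

Section Energy.
Variable c : X -> R.
Hypothesis c_nonneg : forall x, 0 <= c x.
Hypothesis Hb : Summable (invb b).
Hypothesis Hc : Summable c.

Definition edge_energy (f : X -> C) u v := b u v * Cnorm2 (Csub (f u) (f v)).
Definition dirichlet_sum f l := fsum (fun u => fsum (fun v => edge_energy f u v) l) l.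

Lemma edge_energy_nonneg f u v : 0 <= edge_energy f u v.
Proof. unfold edge_energy; apply Rmult_le_pos; auto; apply Cnorm2_nonneg. Qed.

Lemma edge_energy_sym f u v : edge_energy f u v = edge_energy f v u.
Proof. unfold edge_energy; rewrite b_sym, Cnorm2_sym; auto. Qed.

Lemma dirichlet_sum_cons f x l : dirichlet_sum f (x :: l) =
  edge_energy f x x + fsum (edge_energy f x) l + fsum (fun u => edge_energy f u x) l + dirichlet_sum f l.
Proof.
  unfold dirichlet_sum; simpl.
  rewrite (fsum_ext (fun u => edge_energy f u x + fsum (fun v => edge_energy f u v) l) _ l)
    by (intros; reflexivity).
  rewrite fsum_plus. change (fsum (fun v => edge_energy f x v) l) with (fsum (edge_energy f x) l). lra.
Qed.

Lemma Qpart_split f l :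
  Qpart b c f l = / 2 * dirichlet_sum f l + fsum (fun x => c x * Cnorm2 (f x)) l.
Proof. reflexivity. Qed.

Lemma Qpart_ge_dirichlet f l : / 2 * dirichlet_sum f l <= Qpart b c f l.
Proof.
  rewrite Qpart_split.
  assert (0 <= fsum (fun x => c x * Cnorm2 (f x)) l); [| lra].
  apply fsum_nonneg; intros; apply Rmult_le_pos; auto; apply Cnorm2_nonneg.
Qed.

Fixpoint walk_energy (f : X -> C) x q :=
  match q with nil => 0 | y :: q' => edge_energy f x y + walk_energy f y q' end.

Lemma walk_energy_nonneg f x q : 0 <= walk_energy f x q.
Proof.
  revert x; induction q; intros z; simpl; [lra |].
  pose proof (edge_energy_nonneg f z a). specialize (IHq a). lra.
Qed.

Lemma walk_energy_le f x q : walk_energy f x q <= / 2 * dirichlet_sum f (x :: q).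
Proof.
  revert x; induction q as [| z q IH]; intros x; simpl walk_energy.
  - rewrite dirichlet_sum_cons. unfold dirichlet_sum; simpl. pose proof (edge_energy_nonneg f x x). lra.
  - rewrite dirichlet_sum_cons. specialize (IH z). simpl fsum.
    rewrite (edge_energy_sym f z x).
    pose proof (fsum_nonneg (edge_energy f x) q (edge_energy_nonneg f x)).
    pose proof (fsum_nonneg (fun u => edge_energy f u x) q (fun u => edge_energy_nonneg f u x)).
    pose proof (edge_energy_nonneg f x x). lra.
Qed.

(* Cauchy–Schwarz along a walk: |f x - f y|^2 <= (sum 1/b) * (sum b |df|^2). *)
Lemma walk_cauchy_schwarz f x q : chain b x q ->
  Cnorm (Csub (f x) (f (endpoint x q))) * Cnorm (Csub (f x) (f (endpoint x q)))
  <= pweight b x q * walk_energy f x q.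
Proof.
  revert x; induction q as [| z q IH]; intros x hc; simpl.
  - rewrite Cnorm_self; lra.
  - destruct hc as [hb hc]. specialize (IH z hc).
    set (y := endpoint z q) in *. set (A := Cnorm (Csub (f x) (f z))). set (B := Cnorm (Csub (f z) (f y))).
    set (W := pweight b z q) in *. set (E := walk_energy f z q) in *.
    assert (hA : A * A = / b x z * edge_energy f x z). { unfold A, edge_energy. rewrite Cnorm_sq. field. lra. }
    assert (hA0 : 0 <= A) by apply Cnorm_nonneg. assert (hB0 : 0 <= B) by apply Cnorm_nonneg.
    assert (hW : 0 <= W) by (apply pweight_nonneg; auto).
    assert (hE : 0 <= E) by apply walk_energy_nonneg.
    assert (hw0 : 0 < / b x z) by (apply Rinv_0_lt_compat; auto).
    assert (he0 : 0 <= edge_energy f x z) by apply edge_energy_nonneg.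
    assert (amgm : 2 * (A * B) <= / b x z * E + W * edge_energy f x z).
    { apply two_sqrt_le; try (apply Rmult_le_pos; lra).
      replace (A * B * (A * B)) with ((A * A) * (B * B)) by ring. rewrite hA.
      replace (/ b x z * E * (W * edge_energy f x z)) with ((/ b x z * edge_energy f x z) * (W * E)) by ring.
      apply Rmult_le_compat_l; auto. apply Rmult_le_pos; lra. }
    pose proof (Cnorm_tri (f x) (f z) (f y)). fold A B in H.
    pose proof (Cnorm_nonneg (Csub (f x) (f y))).
    assert (Cnorm (Csub (f x) (f y)) * Cnorm (Csub (f x) (f y)) <= (A + B) * (A + B))
      by (apply Rmult_le_compat; auto).
    fold B in IH. nra.
Qed.

Lemma Qle_nonneg f M : Qle b c f M -> 0 <= M.
Proof. intros h. specialize (h nil (NoDup_nil _)). unfold Qpart in h; simpl in h. lra. Qed.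

Lemma path_bound f M x q y : Qle b c f M -> IsPath b x q y ->
  Cnorm (Csub (f x) (f y)) * Cnorm (Csub (f x) (f y)) <= pweight b x q * M.
Proof.
  intros hQ hp. apply IsPath_endpoint in hp. destruct hp as [hnd [hc hl]]. subst y.
  pose proof (walk_cauchy_schwarz f x q hc). pose proof (walk_energy_le f x q).
  pose proof (Qpart_ge_dirichlet f (x :: q)). pose proof (hQ (x :: q) hnd). pose proof (pweight_nonneg x q hc).
  apply Rle_trans with (1 := H). apply Rmult_le_compat_l; auto. lra.
Qed.

Lemma diff_bound f M x y : Qle b c f M ->
  Cnorm (Csub (f x) (f y)) * Cnorm (Csub (f x) (f y)) <= total (invb b) * M.
Proof.
  intros hQ. pose proof (Qle_nonneg f M hQ). pose proof (total_nonneg _ Hb).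
  destruct (classic (x = y)) as [<- | hne].
  - rewrite Cnorm_self. nra.
  - destruct (Hconn x y hne) as [q hq]. pose proof (path_bound f M x q y hQ hq).
    assert (pweight b x q <= total (invb b)).
    { apply IsPath_endpoint in hq. destruct hq as [hnd [hc _]].
      rewrite pweight_edges; auto. apply fsum_le_total, edges_nodup; auto. }
    nra.
Qed.

Theorem canonically_compactifiable (x0 : X) : CanonicallyCompactifiable b c.
Proof.
  intros f [M hM]. exists (Cnorm (f x0) + sqrt (total (invb b) * M)). intros x.
  pose proof (Cnorm_le_add (f x) (f x0)). pose proof (diff_bound f M x x0 hM).
  assert (Cnorm (Csub (f x) (f x0)) <= sqrt (total (invb b) * M)) by (apply le_sqrt_of; auto; apply Cnorm_nonneg).
  lra.
Qed.

Lemma Qle_zero : Qle b c (fun _ => C0) 1.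
Proof.
  intros l _. unfold Qpart.
  rewrite (fsum_zero (fun x => c x * Cnorm2 C0)) by (intros; unfold Cnorm2, C0; simpl; ring).
  rewrite (fsum_zero (fun x => fsum _ l)); [lra |].
  intros u _. apply fsum_zero. intros v _. unfold Cnorm2, Csub, C0; simpl; ring.
Qed.

Lemma rho_ub f x y : Qle b c f 1 -> Cnorm (Csub (f x) (f y)) <= rho b c x y.
Proof.
  intros h. apply sup_ub; [exists f; auto |].
  exists (sqrt (total (invb b))). intros t [g [hg ->]]. apply le_sqrt_of; [apply Cnorm_nonneg |].
  pose proof (diff_bound g 1 x y hg). lra.
Qed.

Lemma rho_le x y B : (forall f, Qle b c f 1 -> Cnorm (Csub (f x) (f y)) <= B) -> rho b c x y <= B.
Proof.
  intros h. apply sup_le; [| intros t [f [hf ->]]; auto].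
  exists 0, (fun _ => C0). split; [apply Qle_zero | rewrite Cnorm_self; auto].
Qed.

Lemma rho_is_metric : IsMetric (rho b c).
Proof.
  assert (nonneg : forall x y, 0 <= rho b c x y).
  { intros x y. pose proof (rho_ub _ x y Qle_zero). rewrite Cnorm_self in H. auto. }
  assert (sym_le : forall x y, rho b c x y <= rho b c y x).
  { intros x y. apply rho_le; intros f hf. rewrite Cnorm_sym. apply rho_ub; auto. }
  split; auto.
  - intros x. pose proof (nonneg x x). assert (rho b c x x <= 0); [| lra].
    apply rho_le; intros; rewrite Cnorm_self; lra.
  - intros x y. pose proof (sym_le x y); pose proof (sym_le y x); lra.
  - intros x y z. apply rho_le; intros f hf. pose proof (Cnorm_tri (f x) (f y) (f z)).
    pose proof (rho_ub f x y hf). pose proof (rho_ub f y z hf). lra.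
Qed.

(* rho^2 <= d: apply the path estimate to each f with Q~(f) <= 1. *)
Lemma rho_sq_le_dmetric x y : rho b c x y * rho b c x y <= dmetric b x y.
Proof.
  apply le_inf; [apply path_weights_nonempty |]. intros t [q [hq ->]].
  pose proof (pweight_nonneg x q (proj1 (proj2 hq))).
  assert (rho b c x y <= sqrt (pweight b x q)).
  { apply rho_le; intros f hf. apply le_sqrt_of; [apply Cnorm_nonneg |].
    pose proof (path_bound f 1 x q y hf hq). lra. }
  pose proof (metric_nonneg rho_is_metric x y). pose proof (sqrt_sqrt _ H).
  pose proof (sqrt_pos (pweight b x q)). nra.
Qed.

Definition fscale (k : R) (f : X -> C) : X -> C := fun x => (k * fst (f x), k * snd (f x)).

Lemma Qpart_scale k f l : Qpart b c (fscale k f) l = k * k * Qpart b c f l.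
Proof.
  unfold Qpart.
  rewrite (fsum_ext (fun u => fsum (fun v => b u v * Cnorm2 (Csub (fscale k f u) (fscale k f v))) l)
     (fun u => k * k * fsum (fun v => b u v * Cnorm2 (Csub (f u) (f v))) l)).
  rewrite (fsum_ext (fun x => c x * Cnorm2 (fscale k f x)) (fun x => k * k * (c x * Cnorm2 (f x)))).
  rewrite !fsum_scal. ring.
  - intros; unfold fscale, Cnorm2; simpl; ring.
  - intros u _. rewrite <- fsum_scal. apply fsum_ext. intros v _. unfold fscale, Cnorm2, Csub; simpl; ring.
Qed.

(* Functions of finite energy are rho-Lipschitz: rescale f to energy <= 1. *)
Lemma energy_lipschitz f M x y : Qle b c f M ->
  Cnorm (Csub (f x) (f y)) <= sqrt (M + 1) * rho b c x y.
Proof.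
  intros hQ. pose proof (Qle_nonneg f M hQ).
  assert (hs : 0 < sqrt (M + 1)) by (apply sqrt_lt_R0; lra).
  set (k := / sqrt (M + 1)).
  assert (hk : 0 < k) by (apply Rinv_0_lt_compat; auto).
  assert (hkk : k * k * (M + 1) = 1) by (unfold k; rewrite <- Rinv_mult, sqrt_sqrt by lra; field; lra).
  assert (hQ2 : Qle b c (fscale k f) 1).
  { intros l hl. rewrite Qpart_scale. specialize (hQ l hl). assert (0 <= k * k) by nra.
    apply Rle_trans with (k * k * M); [apply Rmult_le_compat_l; auto | nra]. }
  pose proof (rho_ub _ x y hQ2).
  assert (Cnorm (Csub (fscale k f x) (fscale k f y)) = k * Cnorm (Csub (f x) (f y))).
  { unfold Cnorm. replace (Cnorm2 (Csub (fscale k f x) (fscale k f y))) with (k * k * Cnorm2 (Csub (f x) (f y)))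
      by (unfold fscale, Cnorm2, Csub; simpl; ring).
    rewrite sqrt_mult by (try nra; apply Cnorm2_nonneg). rewrite sqrt_square; lra. }
  rewrite H1 in H0. unfold k in H0.
  apply (Rmult_le_reg_l (/ sqrt (M + 1))); [apply Rinv_0_lt_compat; auto |].
  replace (/ sqrt (M + 1) * (sqrt (M + 1) * rho b c x y)) with (rho b c x y) by (field; lra). auto.
Qed.

(** ** Cut-off functions and the comparison min(d,1) <= K rho *)

Definition cutoff (z : X) : X -> C := fun x => (Rmin (dmetric b x z) 1, 0).

Lemma cutoff_diff z u v : Rabs (Rmin (dmetric b u z) 1 - Rmin (dmetric b v z) 1) <= dmetric b u v.
Proof.
  apply Rle_trans with (1 := Rmin1_lip _ _).
  pose proof (metric_tri dmetric_is_metric u v z). pose proof (metric_tri dmetric_is_metric v u z).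
  rewrite (metric_sym dmetric_is_metric v u) in H0. unfold Rabs; destruct Rcase_abs; lra.
Qed.

Definition cutoff_energy := total (invb b) / 2 + total c.

(* Each edge contributes at most b * (1/b)^2 = 1/b, each vertex at most c. *)
Lemma cutoff_Qle z : Qle b c (cutoff z) cutoff_energy.
Proof.
  intros l hl. rewrite Qpart_split. unfold cutoff_energy.
  assert (dirichlet_sum (cutoff z) l <= total (invb b)).
  { unfold dirichlet_sum. rewrite fsum_prod. apply Rle_trans with (fsum (invb b) (list_prod l l)).
    - apply fsum_le. intros [u v] _. unfold edge_energy, invb; simpl. destruct Rlt_dec as [h | h].
      + pose proof (cutoff_diff z u v). pose proof (dmetric_edge u v h).
        unfold cutoff, Cnorm2, Csub; simpl.
        set (a := Rmin (dmetric b u z) 1 - Rmin (dmetric b v z) 1) in *.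
        assert (a * a <= / b u v * / b u v).
        { replace (a * a) with (Rabs a * Rabs a) by (rewrite <- Rabs_mult; apply Rabs_right, Rle_ge, Rle_0_sqr).
          apply Rmult_le_compat; try apply Rabs_pos; lra. }
        replace ((0 - 0) * (0 - 0)) with 0 by ring. rewrite Rplus_0_r.
        apply Rle_trans with (b u v * (/ b u v * / b u v)); [apply Rmult_le_compat_l; auto | right; field; lra].
      + assert (b u v = 0) by (pose proof (b_nonneg u v); lra). rewrite H; lra.
    - apply fsum_le_total, NoDup_prod; auto. }
  assert (fsum (fun x => c x * Cnorm2 (cutoff z x)) l <= total c).
  { apply Rle_trans with (fsum c l); [| apply fsum_le_total; auto]. apply fsum_le. intros x _.
    unfold cutoff, Cnorm2; simpl. pose proof (metric_nonneg dmetric_is_metric x z).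
    assert (0 <= Rmin (dmetric b x z) 1 <= 1) by (unfold Rmin; destruct Rle_dec; lra).
    pose proof (c_nonneg x). set (m := Rmin (dmetric b x z) 1) in *.
    assert (m * m + 0 * 0 <= 1) by nra.
    apply Rle_trans with (c x * 1); [apply Rmult_le_compat_l | rewrite Rmult_1_r]; lra. }
  lra.
Qed.

Lemma cutoff_bounded z : Bounded (cutoff z).
Proof.
  exists 1. intros x. unfold cutoff. rewrite Cnorm_real. pose proof (metric_nonneg dmetric_is_metric x z).
  unfold Rmin; destruct Rle_dec; rewrite Rabs_right; lra.
Qed.

Definition Kconst := sqrt (cutoff_energy + 1).

Lemma Kconst_pos : 0 < Kconst.
Proof.
  unfold Kconst, cutoff_energy. apply sqrt_lt_R0.
  pose proof (total_nonneg _ Hb). pose proof (total_nonneg _ Hc). lra.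
Qed.

Lemma min_dmetric_le_rho x y : Rmin (dmetric b x y) 1 <= Kconst * rho b c x y.
Proof.
  pose proof (energy_lipschitz (cutoff y) cutoff_energy x y (cutoff_Qle y)). unfold cutoff, Csub in H; simpl in H.
  replace (0 - 0) with 0 in H by ring. rewrite Cnorm_real, (metric_refl dmetric_is_metric) in H.
  replace (Rmin 0 1) with 0 in H by (unfold Rmin; destruct Rle_dec; lra).
  pose proof (metric_nonneg dmetric_is_metric x y).
  assert (0 <= Rmin (dmetric b x y) 1) by (unfold Rmin; destruct Rle_dec; lra).
  rewrite Rabs_right in H by lra. unfold Kconst. lra.
Qed.

Lemma cauchy_d_rho s : Cauchy (dmetric b) s -> Cauchy (rho b c) s.
Proof.
  intros h e he. destruct (h (e * e)) as [N hN]; [nra |]. exists N; intros n m hn hm.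
  specialize (hN n m hn hm). pose proof (rho_sq_le_dmetric (s n) (s m)).
  pose proof (metric_nonneg rho_is_metric (s n) (s m)).
  destruct (Rlt_le_dec (rho b c (s n) (s m)) e); auto. nra.
Qed.

(* From min(d,1) <= K rho: rho < e'/K forces d < e' when e' <= 1. *)
Lemma small_rho_small_dmetric e x y : 0 < e ->
  rho b c x y < Rmin e 1 / Kconst -> dmetric b x y < e.
Proof.
  intros he h. pose proof Kconst_pos. pose proof (min_dmetric_le_rho x y).
  assert (Kconst * rho b c x y < Rmin e 1).
  { apply (Rmult_lt_compat_l Kconst) in h; auto. replace (Kconst * (Rmin e 1 / Kconst)) with (Rmin e 1) in h by (field; lra). auto. }
  unfold Rmin in *. repeat destruct Rle_dec; lra.
Qed.

Lemma small_pos e : 0 < e -> 0 < Rmin e 1 / Kconst.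
Proof.
  intros he. apply Rdiv_lt_0_compat; [| apply Kconst_pos]. unfold Rmin; destruct Rle_dec; lra.
Qed.

Lemma cauchy_rho_d s : Cauchy (rho b c) s -> Cauchy (dmetric b) s.
Proof.
  intros h e he. destruct (h _ (small_pos e he)) as [N hN].
  exists N; intros n m hn hm. apply small_rho_small_dmetric; auto.
Qed.

Lemma seqdist_rho_sq_le s t : Cauchy (dmetric b) s -> Cauchy (dmetric b) t ->
  seqdist (rho b c) s t * seqdist (rho b c) s t <= seqdist (dmetric b) s t.
Proof.
  intros hs ht.
  apply (cv_le_cv (fun n => rho b c (s n) (t n) * rho b c (s n) (t n)) (fun n => dmetric b (s n) (t n))).
  - apply CV_mult; apply (seqdist_cv _ rho_is_metric); apply cauchy_d_rho; auto.
  - apply (seqdist_cv _ dmetric_is_metric); auto.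
  - intros; apply rho_sq_le_dmetric.
Qed.

Lemma seqdist_min_dmetric_le s t : Cauchy (dmetric b) s -> Cauchy (dmetric b) t ->
  Rmin (seqdist (dmetric b) s t) 1 <= Kconst * seqdist (rho b c) s t.
Proof.
  intros hs ht.
  apply (cv_le_cv (fun n => Rmin (dmetric b (s n) (t n)) 1) (fun n => Kconst * rho b c (s n) (t n))).
  - apply (cv_lip _ _ (fun a => Rmin a 1)); [apply (seqdist_cv _ dmetric_is_metric); auto | apply Rmin1_lip].
  - apply (CV_mult (fun _ => Kconst)); [apply cv_const |].
    apply (seqdist_cv _ rho_is_metric); apply cauchy_d_rho; auto.
  - intros; apply min_dmetric_le_rho.
Qed.

Lemma seqdist_rho_small s t e : Cauchy (dmetric b) s -> Cauchy (dmetric b) t -> 0 < e ->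
  seqdist (dmetric b) s t < e * e -> seqdist (rho b c) s t < e.
Proof.
  intros hs ht he h. pose proof (seqdist_rho_sq_le s t hs ht).
  pose proof (seqdist_nonneg _ rho_is_metric s t (cauchy_d_rho _ hs) (cauchy_d_rho _ ht)).
  set (D := seqdist (rho b c) s t) in *.
  destruct (Rlt_le_dec D e); auto. assert (e * e <= D * D) by (apply Rmult_le_compat; lra). lra.
Qed.

Lemma seqdist_dmetric_small s t e : Cauchy (dmetric b) s -> Cauchy (dmetric b) t -> 0 < e ->
  seqdist (rho b c) s t < Rmin e 1 / Kconst -> seqdist (dmetric b) s t < e.
Proof.
  intros hs ht he h. pose proof Kconst_pos. pose proof (seqdist_min_dmetric_le s t hs ht).
  assert (Kconst * seqdist (rho b c) s t < Rmin e 1).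
  { apply (Rmult_lt_compat_l Kconst) in h; auto.
    replace (Kconst * (Rmin e 1 / Kconst)) with (Rmin e 1) in h by (field; lra). auto. }
  unfold Rmin in *. repeat destruct Rle_dec; lra.
Qed.

(** ** Bounded rho-uniformly continuous functions contain A^+ *)

Definition UnifCont (u : X -> C) := forall e, 0 < e ->
  exists d, 0 < d /\ forall x y, rho b c x y < d -> Cnorm (Csub (u x) (u y)) <= e.
Definition BUC (u : X -> C) := Bounded u /\ UnifCont u.

Lemma Bounded_nonneg (u : X -> C) : Bounded u -> exists M, 0 <= M /\ forall x, Cnorm (u x) <= M.
Proof.
  intros [M hM]. exists (Rmax M 0). split; [apply Rmax_r |]. intros x; specialize (hM x).
  pose proof (Rmax_l M 0); lra.
Qed.

Lemma UnifCont_pair u v e : UnifCont u -> UnifCont v -> 0 < e -> exists d, 0 < d /\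
  forall x y, rho b c x y < d -> Cnorm (Csub (u x) (u y)) <= e /\ Cnorm (Csub (v x) (v y)) <= e.
Proof.
  intros hu hv he. destruct (hu e he) as [d1 [hd1 h1]]. destruct (hv e he) as [d2 [hd2 h2]].
  exists (Rmin d1 d2); split; [apply Rmin_glb_lt; auto |]. intros x y hxy.
  pose proof (Rmin_l d1 d2); pose proof (Rmin_r d1 d2). split; [apply h1 | apply h2]; lra.
Qed.

Lemma BUC_add u v : BUC u -> BUC v -> BUC (fun x => Cadd (u x) (v x)).
Proof.
  intros [[Mu hu] hu2] [[Mv hv] hv2]. split.
  - exists (Mu + Mv); intros x. pose proof (Cnorm_add (u x) (v x)). specialize (hu x); specialize (hv x). lra.
  - intros e he. destruct (UnifCont_pair u v (e / 2) hu2 hv2) as [d [hd h]]; [lra |].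
    exists d; split; auto. intros x y hxy. destruct (h x y hxy) as [h1 h2].
    replace (Csub (Cadd (u x) (v x)) (Cadd (u y) (v y))) with (Cadd (Csub (u x) (u y)) (Csub (v x) (v y)))
      by (destruct (u x), (v x), (u y), (v y); unfold Csub, Cadd; simpl; f_equal; ring).
    pose proof (Cnorm_add (Csub (u x) (u y)) (Csub (v x) (v y))). lra.
Qed.

Lemma BUC_mul u v : BUC u -> BUC v -> BUC (fun x => Cmul (u x) (v x)).
Proof.
  intros [hu hu2] [hv hv2].
  destruct (Bounded_nonneg u hu) as [Mu [hMu hu']]. destruct (Bounded_nonneg v hv) as [Mv [hMv hv']]. split.
  - exists (Mu * Mv); intros x. rewrite Cnorm_mul. apply Rmult_le_compat; auto; apply Cnorm_nonneg.
  - intros e he. set (K := Mu + Mv + 1).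
    destruct (UnifCont_pair u v (e / (2 * K)) hu2 hv2) as [d [hd h]]; [apply Rdiv_lt_0_compat; unfold K; lra |].
    exists d; split; auto. intros x y hxy. destruct (h x y hxy) as [h1 h2].
    replace (Csub (Cmul (u x) (v x)) (Cmul (u y) (v y)))
      with (Cadd (Cmul (u x) (Csub (v x) (v y))) (Cmul (Csub (u x) (u y)) (v y)))
      by (destruct (u x), (v x), (u y), (v y); unfold Csub, Cmul, Cadd; simpl; f_equal; ring).
    eapply Rle_trans; [apply Cnorm_add |]. rewrite !Cnorm_mul.
    pose proof (hu' x); pose proof (hv' y). pose proof (Cnorm_nonneg (Csub (v x) (v y))).
    pose proof (Cnorm_nonneg (Csub (u x) (u y))). pose proof (Cnorm_nonneg (u x)). pose proof (Cnorm_nonneg (v y)).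
    apply Rle_trans with (K * (e / (2 * K)) + K * (e / (2 * K))).
    + apply Rplus_le_compat; [apply Rmult_le_compat; unfold K in *; lra |].
      rewrite (Rmult_comm K). apply Rmult_le_compat; unfold K in *; lra.
    + right; field; unfold K; lra.
Qed.

Lemma BUC_const z : BUC (fun _ => z).
Proof.
  split; [exists (Cnorm z); intros; lra |].
  intros e he; exists 1; split; [lra |]; intros; rewrite Cnorm_self; lra.
Qed.

Lemma BUC_conj u : BUC u -> BUC (fun x => Cconj (u x)).
Proof.
  intros [[Mu hu] hu2]. split.
  - exists Mu; intros x; rewrite Cnorm_conj; auto.
  - intros e he. destruct (hu2 e he) as [d [hd h]]. exists d; split; auto. intros x y hxy.
    replace (Csub (Cconj (u x)) (Cconj (u y))) with (Cconj (Csub (u x) (u y)))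
      by (destruct (u x), (u y); unfold Csub, Cconj; simpl; f_equal; ring).
    rewrite Cnorm_conj; auto.
Qed.

Lemma BUC_closed u :
  (forall e, 0 < e -> exists v, BUC v /\ forall x, Cnorm (Csub (u x) (v x)) <= e) -> BUC u.
Proof.
  intros hu. destruct (hu 1 ltac:(lra)) as [v [[[Mv hv] _] hv2]]. split.
  - exists (Mv + 1). intros x. pose proof (Cnorm_le_add (u x) (v x)). specialize (hv x); specialize (hv2 x). lra.
  - intros e he. destruct (hu (e / 3)) as [w [[_ hw] hw2]]; [lra |]. destruct (hw (e / 3)) as [d [hd h]]; [lra |].
    exists d; split; auto. intros x y hxy. specialize (h x y hxy).
    pose proof (Cnorm_tri (u x) (w x) (u y)). pose proof (Cnorm_tri (w x) (w y) (u y)).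
    pose proof (hw2 x) as h4; pose proof (hw2 y) as h5. rewrite Cnorm_sym in h5. lra.
Qed.

Lemma BUC_cstar : CstarSub BUC.
Proof.
  split; [intros u [h _]; auto |]. split; [apply BUC_const |]. split; [apply BUC_add |].
  split; [intros z u hu; apply BUC_mul; auto; apply BUC_const |].
  split; [apply BUC_mul |]. split; [apply BUC_conj | apply BUC_closed].
Qed.

Lemma energy_UnifCont f M : Qle b c f M -> UnifCont f.
Proof.
  intros hQ e he. pose proof (Qle_nonneg f M hQ).
  assert (hs : 0 < sqrt (M + 1)) by (apply sqrt_lt_R0; lra).
  exists (e / sqrt (M + 1)); split; [apply Rdiv_lt_0_compat; auto |]. intros x y hxy.
  pose proof (energy_lipschitz f M x y hQ).
  apply (Rmult_lt_compat_l (sqrt (M + 1))) in hxy; auto.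
  replace (sqrt (M + 1) * (e / sqrt (M + 1))) with e in hxy by (field; lra). lra.
Qed.

Lemma InA_BUC u : InA b c u -> BUC u.
Proof.
  intros hu. apply BUC_closed. intros e he.
  destruct (hu e he) as [f [[M hM] [hb hf]]]. exists f; split; auto. split; auto. apply (energy_UnifCont f M hM).
Qed.

Lemma Aplus_BUC u : InAplus b c u -> BUC u.
Proof. intros h. apply h; [apply BUC_cstar | apply InA_BUC | apply BUC_const]. Qed.

Lemma Aplus_cstar : CstarSub (InAplus b c).
Proof.
  split; [intros u hu; apply (Aplus_BUC u hu) |].
  split; [intros S (_ & h0 & _) hA h1; exact h0 |].
  split; [intros u v hu hv S hS hA h1; pose proof hS as (_ & _ & hadd & _); apply hadd;
          [apply hu | apply hv]; auto |].
  split; [intros z u hu S hS hA h1; pose proof hS as (_ & _ & _ & hsc & _); apply hsc;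
          apply hu; auto |].
  split; [intros u v hu hv S hS hA h1; pose proof hS as (_ & _ & _ & _ & hmul & _); apply hmul;
          [apply hu | apply hv]; auto |].
  split; [intros u hu S hS hA h1; pose proof hS as (_ & _ & _ & _ & _ & hcj & _); apply hcj;
          apply hu; auto |].
  intros u hu S hS hA h1. pose proof hS as (_ & _ & _ & _ & _ & _ & hcl).
  apply hcl. intros e he. destruct (hu e he) as [v [hv hv2]].
  exists v; split; auto. apply hv; auto.
Qed.

Lemma Aplus_add u v : InAplus b c u -> InAplus b c v -> InAplus b c (fun x => Cadd (u x) (v x)).
Proof. apply (proj1 (proj2 (proj2 Aplus_cstar))). Qed.
Lemma Aplus_scal z u : InAplus b c u -> InAplus b c (fun x => Cmul z (u x)).
Proof. apply (proj1 (proj2 (proj2 (proj2 Aplus_cstar)))). Qed.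
Lemma Aplus_mul u v : InAplus b c u -> InAplus b c v -> InAplus b c (fun x => Cmul (u x) (v x)).
Proof. apply (proj1 (proj2 (proj2 (proj2 (proj2 Aplus_cstar))))). Qed.
Lemma Aplus_conj u : InAplus b c u -> InAplus b c (fun x => Cconj (u x)).
Proof. apply (proj1 (proj2 (proj2 (proj2 (proj2 (proj2 Aplus_cstar)))))). Qed.
Lemma Aplus_closed u :
  (forall e, 0 < e -> exists v, InAplus b c v /\ forall x, Cnorm (Csub (u x) (v x)) <= e) -> InAplus b c u.
Proof. apply (proj2 (proj2 (proj2 (proj2 (proj2 (proj2 Aplus_cstar)))))). Qed.
Lemma Aplus_zero : InAplus b c (fun _ => C0).
Proof. apply (proj1 (proj2 Aplus_cstar)). Qed.
Lemma Aplus_one : InAplus b c (fun _ => C1).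
Proof. intros S hS hA h1; auto. Qed.

Lemma cutoff_Aplus z : InAplus b c (cutoff z).
Proof.
  intros S hS hA h1. apply hA. intros e he. exists (cutoff z).
  split; [exists cutoff_energy; apply cutoff_Qle |].
  split; [apply cutoff_bounded | intros; rewrite Cnorm_self; lra].
Qed.

Definition ext (u : X -> C) (s : nat -> X) : C := Clim (fun n => u (s n)).

Lemma BUC_cv u s : BUC u -> Cauchy (rho b c) s -> Cv (fun n => u (s n)) (ext u s).
Proof.
  intros [_ hu] hs.
  assert (h : forall p : C -> R, (forall z, Rabs (p z) <= Cnorm z) -> (forall z w, p (Csub z w) = p z - p w) ->
     Un_cv (fun n => p (u (s n))) (lim_or_zero (fun n => p (u (s n))))).
  { intros p hp hp2. assert (Cauchy_crit (fun n => p (u (s n)))).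
    { intros e he. destruct (hu (e / 2)) as [d [hd hd2]]; [lra |]. destruct (hs d hd) as [N hN].
      exists N; intros n m hn hm. unfold R_dist. rewrite <- hp2. pose proof (hp (Csub (u (s n)) (u (s m)))).
      pose proof (hd2 _ _ (hN n m hn hm)). lra. }
    destruct (R_complete _ H) as [l hl]. rewrite (lim_eq _ _ hl); auto. }
  split; simpl; apply h; try (intros; apply Cnorm_fst); try (intros; apply Cnorm_snd);
    intros [] []; reflexivity.
Qed.

Lemma ext_pt u (s : nat -> X) x : (forall n, s n = x) -> ext u s = u x.
Proof.
  intros h. apply Cv_Clim. apply (Cv_ext (fun _ => u x)); [intros; rewrite h; auto | apply Cv_const].
Qed.

Lemma ext_cont u : BUC u -> forall e, 0 < e -> exists d, 0 < d /\ forall s t,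
  Cauchy (rho b c) s -> Cauchy (rho b c) t -> seqdist (rho b c) s t < d -> Cnorm (Csub (ext u s) (ext u t)) <= e.
Proof.
  intros hu e he. destruct hu as [hB hU]. destruct (hU e he) as [d [hd h]]. exists d; split; auto.
  intros s t hs ht hst. destruct (seqdist_lt_ev _ rho_is_metric s t d hs ht hst) as [N hN].
  apply (Cv_norm_le (fun n => Csub (u (s n)) (u (t n)))); [| lra |].
  - apply (Cv_sub (fun n => u (s n)) (fun n => u (t n))); apply BUC_cv; try split; auto.
  - exists N; intros n hn. apply h; auto.
Qed.

Lemma point_character (s : Compl (rho b c)) : IsCharacter b c (fun u => ext u (proj1_sig s)).
Proof.
  pose proof (proj2_sig s) as hs. simpl in hs. split; [| split; [| split]].
  - intros u v hu hv. apply Cv_Clim. apply Cv_add; apply BUC_cv; auto; apply Aplus_BUC; auto.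
  - intros z u hu. apply Cv_Clim. apply Cv_mul; [apply Cv_const | apply BUC_cv; auto; apply Aplus_BUC; auto].
  - intros u v hu hv. apply Cv_Clim. apply Cv_mul; apply BUC_cv; auto; apply Aplus_BUC; auto.
  - exists (fun _ => C1). split; [apply Aplus_one |].
    cbv beta. replace (ext (fun _ => C1) (proj1_sig s)) with C1 by (symmetry; apply Cv_Clim, Cv_const).
    unfold C1, C0; intros h; inversion h; lra.
Qed.

Definition Phi (s : Compl (rho b c)) : Kspace b c := exist _ _ (point_character s).

Lemma rho_totally_bounded (x0 : X) :
  forall e, 0 < e -> exists F : list X, forall x, exists y, In y F /\ rho b c x y < e.
Proof.
  intros e he. destruct (dmetric_totally_bounded x0 Hb (e * e)) as [F hF]; [nra |].
  exists F; intros x. destruct (hF x) as [y [hy hd]]. exists y; split; auto.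
  pose proof (rho_sq_le_dmetric x y). pose proof (metric_nonneg rho_is_metric x y).
  destruct (Rlt_le_dec (rho b c x y) e); auto. nra.
Qed.

(** ** Every character of A^+ is evaluation at a point of the completion *)

(* Inverting a real function of A^+ that is bounded below by dd > 0 and above by
   MM: the partial sums of the geometric series for 1/v = (1/MM) sum (1 - v/MM)^k
   lie in A^+ and converge uniformly, so 1/v lies in A^+. *)
Section Inverse.
Variable v : X -> C.
Variables dd MM : R.
Hypothesis v_Aplus : InAplus b c v.
Hypothesis v_real : forall x, snd (v x) = 0.
Hypothesis v_lower : forall x, dd <= fst (v x).
Hypothesis v_upper : forall x, fst (v x) <= MM.
Hypothesis dd_pos : 0 < dd.
Hypothesis dd_le_MM : dd <= MM.

Fixpoint inv_approx (K : nat) : X -> C :=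
  match K with
  | O => fun _ => C0
  | S K => fun x => Cadd (Cmul (/ MM, 0) C1) (Cmul (Cadd C1 (Cmul (- / MM, 0) (v x))) (inv_approx K x))
  end.

Lemma inv_approx_Aplus K : InAplus b c (inv_approx K).
Proof.
  induction K; simpl; [apply Aplus_zero |]. apply Aplus_add.
  - apply (Aplus_scal (/ MM, 0) (fun _ => C1)), Aplus_one.
  - apply (Aplus_mul (fun x => Cadd C1 (Cmul (- / MM, 0) (v x))) (inv_approx K)); auto.
    apply (Aplus_add (fun _ => C1) (fun x => Cmul (- / MM, 0) (v x))); [apply Aplus_one | apply Aplus_scal; auto].
Qed.

(* Each step multiplies the error by 1 - v/MM, which lies in [0, 1 - dd/MM]. *)
Lemma inv_approx_error K x : snd (inv_approx K x) = 0 /\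
  Rabs (/ fst (v x) - fst (inv_approx K x)) <= / dd * (1 - dd / MM) ^ K.
Proof.
  pose proof (v_real x). pose proof (v_lower x). pose proof (v_upper x).
  assert (hM : 0 < MM) by lra. set (V := fst (v x)) in *.
  induction K; simpl.
  - unfold C0; simpl. split; auto. replace (/ V - 0) with (/ V) by ring. rewrite Rabs_right.
    + rewrite Rmult_1_r. apply Rinv_le_contravar; lra.
    + apply Rle_ge; left; apply Rinv_0_lt_compat; lra.
  - destruct IHK as [h1 h2]. destruct (inv_approx K x) as [a a2]. simpl in h1, h2 |- *. subst a2.
    destruct (v x) as [v1 v2]. simpl in H, V. subst v2. unfold V in *; clear V.
    simpl. split; [ring |].
    match goal with |- Rabs ?t <= _ => replace t with ((1 - v1 / MM) * (/ v1 - a)) by (field; lra) end.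
    assert (hvm : v1 / MM <= 1) by (apply (Rmult_le_reg_r MM); auto; field_simplify; lra).
    assert (hdv : dd / MM <= v1 / MM)
      by (unfold Rdiv; apply Rmult_le_compat_r; [left; apply Rinv_0_lt_compat |]; lra).
    rewrite Rabs_mult, (Rabs_right (1 - v1 / MM)) by lra.
    replace (/ dd * ((1 - dd / MM) * (1 - dd / MM) ^ K)) with ((1 - dd / MM) * (/ dd * (1 - dd / MM) ^ K)) by ring.
    apply Rmult_le_compat; try lra. apply Rabs_pos.
Qed.

Lemma inverse_Aplus : InAplus b c (fun x => (/ fst (v x), 0)).
Proof.
  apply Aplus_closed. intros e he.
  assert (hM : 0 < MM) by lra.
  set (r := 1 - dd / MM).
  assert (hr : 0 <= r < 1).
  { unfold r; split; [cut (dd / MM <= 1); [lra |] | cut (0 < dd / MM); [lra |]].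
    - apply (Rmult_le_reg_r MM); auto. field_simplify; lra.
    - apply Rdiv_lt_0_compat; auto. }
  destruct (pow_lt_1_zero r ltac:(rewrite Rabs_right; lra) (e * dd) ltac:(nra)) as [K hK].
  specialize (hK K (le_n K)). rewrite Rabs_right in hK by (apply Rle_ge, pow_le; lra).
  exists (inv_approx K); split; [apply inv_approx_Aplus |]. intros x. destruct (inv_approx_error K x) as [h1 h2].
  destruct (inv_approx K x) as [a a2]; simpl in h1, h2. subst a2. unfold Csub; simpl.
  replace (0 - 0) with 0 by ring. rewrite Cnorm_real. fold r in h2.
  apply Rle_trans with (1 := h2). apply (Rmult_le_reg_l dd); auto.
  replace (dd * (/ dd * r ^ K)) with (r ^ K) by (field; lra). nra.
Qed.
End Inverse.

Section Character.
Variable phi : (X -> C) -> C.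
Hypothesis hphi : IsCharacter b c phi.

Lemma phi_add u v : InAplus b c u -> InAplus b c v -> phi (fun x => Cadd (u x) (v x)) = Cadd (phi u) (phi v).
Proof. apply hphi. Qed.
Lemma phi_scal z u : InAplus b c u -> phi (fun x => Cmul z (u x)) = Cmul z (phi u).
Proof. apply hphi. Qed.
Lemma phi_mul u v : InAplus b c u -> InAplus b c v -> phi (fun x => Cmul (u x) (v x)) = Cmul (phi u) (phi v).
Proof. apply hphi. Qed.

Lemma phi_one : phi (fun _ => C1) = C1.
Proof.
  destruct hphi as [_ [_ [_ [w [hw hw0]]]]].
  pose proof (phi_mul w (fun _ => C1) hw Aplus_one). cbv beta in H.
  replace (fun x => Cmul (w x) C1) with w in H
    by (apply functional_extensionality; intros x; destruct (w x); unfold Cmul, C1; simpl; f_equal; ring).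
  apply (Cmul_cancel (phi w)); auto.
Qed.

Lemma phi_zero : phi (fun _ => C0) = C0.
Proof.
  replace (fun _ : X => C0) with (fun x : X => Cmul C0 ((fun _ : X => C1) x))
    by (apply functional_extensionality; intros; unfold Cmul, C0, C1; simpl; f_equal; ring).
  rewrite phi_scal by apply Aplus_one. unfold Cmul, C0; simpl; f_equal; ring.
Qed.

Definition centered (u : X -> C) : X -> C := fun x => Cadd (u x) (Cmul (Csub C0 (phi u)) C1).
Definition deviation (u : X -> C) : X -> C := fun x => Cmul (Cconj (centered u x)) (centered u x).

Lemma centered_Aplus u : InAplus b c u -> InAplus b c (centered u).
Proof. intros h. apply Aplus_add; auto. apply (Aplus_scal _ (fun _ => C1)). apply Aplus_one. Qed.

Lemma deviation_Aplus u : InAplus b c u -> InAplus b c (deviation u).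
Proof. intros h. apply Aplus_mul; [apply (Aplus_conj (centered u)) |]; apply centered_Aplus; auto. Qed.

Lemma phi_centered u : InAplus b c u -> phi (centered u) = C0.
Proof.
  intros h. unfold centered. rewrite phi_add; auto.
  - rewrite (phi_scal _ (fun _ => C1)) by apply Aplus_one.
    rewrite phi_one. destruct (phi u); unfold Cadd, Cmul, Csub, C1, C0; simpl; f_equal; ring.
  - apply (Aplus_scal _ (fun _ => C1)). apply Aplus_one.
Qed.

Lemma phi_deviation u : InAplus b c u -> phi (deviation u) = C0.
Proof.
  intros h. unfold deviation. rewrite (phi_mul (fun x => Cconj (centered u x)) (centered u)).
  - rewrite phi_centered; auto. destruct (phi (fun x => Cconj (centered u x))); unfold Cmul, C0; simpl; f_equal; ring.
  - apply (Aplus_conj (centered u)); apply centered_Aplus; auto.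
  - apply centered_Aplus; auto.
Qed.

Lemma deviation_val u x : deviation u x = (Cnorm2 (Csub (u x) (phi u)), 0).
Proof.
  unfold deviation, centered. destruct (u x), (phi u).
  unfold Cmul, Cconj, Cadd, Csub, C0, C1, Cnorm2; simpl; f_equal; ring.
Qed.

Lemma deviation_ext u (s : nat -> X) : InAplus b c u -> Cauchy (rho b c) s ->
  ext (deviation u) s = (Cnorm2 (Csub (ext u s) (phi u)), 0).
Proof.
  intros h hs. apply Cv_Clim. apply (Cv_ext (fun n => (Cnorm2 (Csub (u (s n)) (phi u)), 0))).
  - intros; rewrite deviation_val; auto.
  - destruct (BUC_cv u s (Aplus_BUC u h) hs) as [h1 h2]. split; simpl; [| apply cv_const].
    unfold Cnorm2; simpl. apply CV_plus; apply CV_mult; apply cv_minus; auto; apply cv_const.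
Qed.

(* A witness (u, r): an element u of A^+ together with a level r > 0.  Its bump
   is |u - phi u|^2 when the witness is valid, 0 otherwise. *)
Definition valid (i : (X -> C) * R) : Prop := InAplus b c (fst i) /\ 0 < snd i.
Definition bump (i : (X -> C) * R) : X -> C :=
  match excluded_middle_informative (valid i) with left _ => deviation (fst i) | right _ => fun _ => C0 end.
Fixpoint bump_sum (l : list ((X -> C) * R)) : X -> C :=
  match l with nil => fun _ => C0 | i :: l' => fun x => Cadd (bump i x) (bump_sum l' x) end.
Fixpoint min_level (l : list ((X -> C) * R)) : R :=
  match l with
  | nil => 1
  | i :: l' => Rmin (match excluded_middle_informative (valid i) with left _ => snd i | right _ => 1 end)
                    (min_level l')
  end.

Lemma bump_Aplus i : InAplus b c (bump i).
Proof.
  unfold bump; destruct excluded_middle_informative as [[h1 h2] | h]; [apply deviation_Aplus; auto | apply Aplus_zero].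
Qed.

Lemma phi_bump i : phi (bump i) = C0.
Proof.
  unfold bump; destruct excluded_middle_informative as [[h1 h2] | h]; [apply phi_deviation; auto | apply phi_zero].
Qed.

Lemma bump_val i x : snd (bump i x) = 0 /\ 0 <= fst (bump i x).
Proof.
  unfold bump; destruct excluded_middle_informative as [[h1 h2] | h].
  - rewrite deviation_val; simpl; split; auto; apply Cnorm2_nonneg.
  - unfold C0; simpl; lra.
Qed.

Lemma bump_sum_Aplus l : InAplus b c (bump_sum l).
Proof. induction l; simpl; [apply Aplus_zero |]. apply Aplus_add; auto; apply bump_Aplus. Qed.

Lemma phi_bump_sum l : phi (bump_sum l) = C0.
Proof.
  induction l; simpl; [apply phi_zero |]. rewrite phi_add; [| apply bump_Aplus | apply bump_sum_Aplus].
  rewrite phi_bump, IHl. unfold Cadd, C0; simpl; f_equal; ring.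
Qed.

Lemma bump_sum_val l x : snd (bump_sum l x) = 0 /\ 0 <= fst (bump_sum l x).
Proof. induction l; simpl; [unfold C0; simpl; lra |]. destruct (bump_val a x). destruct IHl; split; lra. Qed.

Lemma bump_sum_ge l i x : In i l -> fst (bump i x) <= fst (bump_sum l x).
Proof.
  induction l; simpl; [tauto |]. intros [-> | h].
  - destruct (bump_sum_val l x); lra.
  - destruct (bump_val a x). specialize (IHl h); lra.
Qed.

Lemma min_level_pos l : 0 < min_level l.
Proof.
  induction l; simpl; [lra |]. apply Rmin_glb_lt; auto.
  destruct excluded_middle_informative as [[h1 h2] | h]; lra.
Qed.

Lemma min_level_le l i : In i l -> valid i -> min_level l <= snd i.
Proof.
  induction l; simpl; [tauto |]. intros [-> | h] hv.
  - destruct excluded_middle_informative; [apply Rmin_l | contradiction].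
  - apply Rle_trans with (min_level l); [apply Rmin_r | auto].
Qed.

Definition witness_set (i : (X -> C) * R) (t : Compl (rho b c)) : Prop :=
  valid i /\ snd i < fst (ext (deviation (fst i)) (proj1_sig t)).

Lemma witness_set_open i : copen (rho b c) (witness_set i).
Proof.
  intros t [[hA hr] hlt]. set (g := fst (ext (deviation (fst i)) (proj1_sig t)) - snd i).
  destruct (ext_cont (deviation (fst i)) (Aplus_BUC _ (deviation_Aplus _ hA)) (g / 2)) as [d [hd hd2]];
    [unfold g; lra |].
  exists d; split; auto. intros t' ht'. split; [split; auto |].
  pose proof (hd2 (proj1_sig t) (proj1_sig t') (proj2_sig t) (proj2_sig t') ht').
  pose proof (Cnorm_fst (Csub (ext (deviation (fst i)) (proj1_sig t)) (ext (deviation (fst i)) (proj1_sig t')))).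
  change (fst (Csub ?a ?b)) with (fst a - fst b) in H0. unfold Rabs in H0; destruct Rcase_abs in H0; unfold g in *; lra.
Qed.

(* If phi is not evaluation at t, some u in A^+ has ext u t <> phi u, and then
   (u, |ext u t - phi u|^2 / 2) is a witness at t. *)
Lemma witness_at t : (exists u, InAplus b c u /\ phi u <> ext u (proj1_sig t)) -> exists i, witness_set i t.
Proof.
  intros [u [hu hne]].
  set (q := Cnorm2 (Csub (ext u (proj1_sig t)) (phi u))).
  assert (hq : 0 < q).
  { destruct (Cnorm2_nonneg (Csub (ext u (proj1_sig t)) (phi u))) as [h | h]; auto.
    exfalso. apply hne. symmetry. apply Cnorm_zero_eq. unfold Cnorm, q in *. rewrite <- h. apply sqrt_0. }
  exists (u, q / 2). split; [split; [exact hu | simpl; lra] |].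
  change (q / 2 < fst (ext (deviation u) (proj1_sig t))).
  rewrite deviation_ext; auto; [change (q / 2 < q); lra | apply (proj2_sig t)].
Qed.

(* Finitely many witness sets cannot cover the completion: on X the bump sum v
   would be bounded below by the least level, hence invertible in A^+, while
   phi v = 0 and phi(v * 1/v) = phi 1 = 1. *)
Lemma no_finite_witness_cover l : ~ (forall t, exists i, In i l /\ witness_set i t).
Proof.
  intros hl.
  pose proof (min_level_pos l) as hdd. set (v := bump_sum l) in *. set (dd := min_level l) in *.
  assert (v_lower : forall x, dd <= fst (v x)).
  { intros x. destruct (hl (embed _ rho_is_metric x)) as [i [hi [[hA hr] hlt]]].
    change (proj1_sig (embed _ rho_is_metric x)) with (fun _ : nat => x) in hlt.
    rewrite (ext_pt _ _ x) in hlt by auto.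
    pose proof (bump_sum_ge l i x hi). unfold bump in H.
    destruct excluded_middle_informative as [_ | hn]; [| exfalso; apply hn; split; auto].
    pose proof (min_level_le l i hi (conj hA hr)). unfold v, dd. lra. }
  destruct (Bounded_nonneg v (proj1 Aplus_cstar v (bump_sum_Aplus l))) as [M [hM0 hM]].
  assert (v_upper : forall x, fst (v x) <= M + dd).
  { intros x. pose proof (Cnorm_fst (v x)). pose proof (hM x). pose proof (Rle_abs (fst (v x))). lra. }
  assert (v_real : forall x, snd (v x) = 0) by (intros; apply bump_sum_val).
  pose proof (inverse_Aplus v dd (M + dd) (bump_sum_Aplus l) v_real v_lower v_upper hdd ltac:(lra)) as hinv.
  assert (e : (fun x => Cmul (v x) (/ fst (v x), 0)) = (fun _ => C1)).
  { apply functional_extensionality; intros x. specialize (v_lower x); specialize (v_real x).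
    destruct (v x) as [v1 v2]; simpl in *; subst v2. unfold Cmul, C1; simpl; f_equal; field; lra. }
  pose proof (phi_mul v _ (bump_sum_Aplus l) hinv). cbv beta in H.
  rewrite e, phi_one in H. unfold v in H. rewrite phi_bump_sum in H.
  unfold Cmul, C0, C1 in H; simpl in H. injection H as h1 h2. lra.
Qed.

(* Gelfand: by compactness of the rho-completion, phi is evaluation at some point. *)
Lemma character_is_point (x0 : X) :
  exists p : Compl (rho b c), forall u, InAplus b c u -> phi u = ext u (proj1_sig p).
Proof.
  apply NNPP; intros hno.
  assert (hcov : forall t, exists i, witness_set i t).
  { intros t. apply witness_at. apply NNPP; intros h. apply hno. exists t. intros u hu.
    apply NNPP; intros h2. apply h. exists u; auto. }
  destruct (completion_compact _ rho_is_metric x0 (rho_totally_bounded x0) _ witness_set witness_set_open hcov)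
    as [l hl].
  exact (no_finite_witness_cover l hl).
Qed.
End Character.

(** ** The homeomorphism iota between the d- and rho-completions *)

(* Both completions have the same Cauchy sequences, so iota is the identity on
   sequences. *)
Definition iota (s : Compl (dmetric b)) : Compl (rho b c) :=
  exist _ (proj1_sig s) (cauchy_d_rho _ (proj2_sig s)).
Definition iota_inv (s : Compl (rho b c)) : Compl (dmetric b) :=
  exist _ (proj1_sig s) (cauchy_rho_d _ (proj2_sig s)).

Lemma iota_cont : Continuous (copen (dmetric b)) (copen (rho b c)) iota.
Proof.
  intros V hV s hs. destruct (hV _ hs) as [e [he h]]. exists (e * e); split; [nra |].
  intros t ht. apply h. apply (seqdist_rho_small (proj1_sig s) (proj1_sig t)); auto; apply proj2_sig.
Qed.

Lemma iota_inv_cont : Continuous (copen (rho b c)) (copen (dmetric b)) iota_inv.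
Proof.
  intros V hV s hs. destruct (hV _ hs) as [e [he h]].
  exists (Rmin e 1 / Kconst); split; [apply small_pos; auto |].
  intros t ht. apply h.
  apply (seqdist_dmetric_small (proj1_sig s) (proj1_sig t)); auto; apply cauchy_rho_d, proj2_sig.
Qed.

Lemma iota_points x s t : IsPointOf _ s x -> IsPointOf _ t x -> ceq (rho b c) (iota s) t.
Proof.
  intros h1 h2. unfold ceq, cdist; simpl. apply (seqdist_same _ rho_is_metric). intros n; rewrite h1, h2; auto.
Qed.

(* A continuous g agreeing with iota on the (dense) image of X agrees with it
   everywhere: compare both at a far-out term x_n of s. *)
Lemma iota_unique (g : Compl (dmetric b) -> Compl (rho b c)) :
  Continuous (copen (dmetric b)) (copen (rho b c)) g ->
  (forall x s t, IsPointOf _ s x -> IsPointOf _ t x -> ceq _ (g s) t) ->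
  forall s, ceq _ (g s) (iota s).
Proof.
  intros hg hp s. unfold ceq. apply Rsmall_eq0; [apply (cdist_nonneg _ rho_is_metric) |].
  intros e he.
  destruct (hg _ (ball_open _ rho_is_metric (g s) (e / 2)) s) as [d [hd h]].
  { rewrite (cdist_self _ rho_is_metric); lra. }
  destruct (cdist_density _ dmetric_is_metric s (d / 2)) as [N1 hN1]; [lra |].
  destruct (cdist_density _ rho_is_metric (iota s) (e / 2)) as [N2 hN2]; [lra |].
  set (n := max N1 N2). specialize (hN1 n ltac:(lia)). specialize (hN2 n ltac:(lia)).
  set (xn := proj1_sig s n) in *.
  specialize (h (embed _ dmetric_is_metric xn) ltac:(lra)).
  pose proof (hp xn (embed _ dmetric_is_metric xn) (embed _ rho_is_metric xn) (fun _ => eq_refl) (fun _ => eq_refl)).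
  unfold ceq in H.
  pose proof (cdist_tri _ rho_is_metric (g s) (g (embed _ dmetric_is_metric xn)) (embed _ rho_is_metric xn)).
  pose proof (cdist_tri _ rho_is_metric (g s) (embed _ rho_is_metric xn) (iota s)).
  rewrite (cdist_sym _ rho_is_metric (embed _ rho_is_metric xn) (iota s)) in H1.
  change (cdist (rho b c) (iota s) (embed _ rho_is_metric xn) <= e / 2) in hN2. lra.
Qed.

Lemma iota_homeo : Homeo (ceq (dmetric b)) (ceq (rho b c)) (copen (dmetric b)) (copen (rho b c)) iota.
Proof.
  split; [apply iota_cont |]. exists iota_inv. split; [apply iota_inv_cont |].
  split; intros a; unfold ceq, cdist; simpl; [apply (seqdist_same _ dmetric_is_metric) | apply (seqdist_same _ rho_is_metric)];
    auto.
Qed.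

(** ** The homeomorphism Phi from the rho-completion onto the character space K *)

Lemma Kopen_ball (u : X -> C) (w : C) e : InAplus b c u ->
  Kopen b c (fun q => Cnorm (Csub (proj1_sig q u) w) < e).
Proof.
  intros hu p hp. exists (u :: nil), (e - Cnorm (Csub (proj1_sig p u) w)). split; [lra |].
  split; [intros a [<- | []]; auto |]. intros q hq. specialize (hq u (or_introl eq_refl)).
  pose proof (Cnorm_tri (proj1_sig q u) (proj1_sig p u) w). lra.
Qed.

Lemma common_modulus l : (forall a, In a l -> InAplus b c a) -> forall e, 0 < e -> exists d, 0 < d /\
  forall s t, Cauchy (rho b c) s -> Cauchy (rho b c) t -> seqdist (rho b c) s t < d ->
  forall a, In a l -> Cnorm (Csub (ext a s) (ext a t)) <= e.
Proof.
  induction l as [| a l IH]; intros hl e he.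
  - exists 1; split; [lra |]. intros s t _ _ _ a [].
  - destruct (IH (fun a h => hl a (or_intror h)) e he) as [d1 [hd1 h1]].
    destruct (ext_cont a (Aplus_BUC a (hl a (or_introl eq_refl))) e he) as [d2 [hd2 h2]].
    exists (Rmin d1 d2); split; [apply Rmin_glb_lt; auto |]. intros s t hs ht hst a' [<- | ha'].
    + apply h2; auto. pose proof (Rmin_r d1 d2); lra.
    + apply h1; auto. pose proof (Rmin_l d1 d2); lra.
Qed.

Lemma Phi_cont : Continuous (copen (rho b c)) (Kopen b c) Phi.
Proof.
  intros U hU s hs. destruct (hU _ hs) as [l [e [he [hl h]]]].
  destruct (common_modulus l hl (e / 2)) as [d [hd hd2]]; [lra |]. exists d; split; auto.
  intros t ht. apply h. intros a ha.
  change (Cnorm (Csub (ext a (proj1_sig t)) (ext a (proj1_sig s))) < e).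
  rewrite Cnorm_sym. pose proof (hd2 (proj1_sig s) (proj1_sig t) (proj2_sig s) (proj2_sig t) ht a ha). lra.
Qed.

Lemma Phi_points x s : IsPointOf _ s x -> forall u, InAplus b c u -> proj1_sig (Phi s) u = u x.
Proof. intros hs u hu. apply ext_pt; auto. Qed.

(* Uniqueness, again by density of X: g s and Phi s agree on each u, as both
   are close to the evaluation at a far-out term of s. *)
Lemma Phi_unique (g : Compl (rho b c) -> Kspace b c) :
  Continuous (copen (rho b c)) (Kopen b c) g ->
  (forall x s, IsPointOf _ s x -> forall u, InAplus b c u -> proj1_sig (g s) u = u x) ->
  forall s, Keq b c (g s) (Phi s).
Proof.
  intros hg hp s u hu. change (proj1_sig (g s) u = ext u (proj1_sig s)).
  apply Cnorm_small_eq. intros e he.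
  destruct (hg _ (Kopen_ball u (proj1_sig (g s) u) (e / 2) hu) s) as [d1 [hd1 h1]].
  { rewrite Cnorm_self; lra. }
  destruct (ext_cont u (Aplus_BUC u hu) (e / 2)) as [d2 [hd2 h2]]; [lra |].
  pose proof (Rmin_l d1 d2). pose proof (Rmin_r d1 d2). pose proof (Rmin_glb_lt d1 d2 0 hd1 hd2).
  destruct (cdist_density _ rho_is_metric s (Rmin d1 d2 / 2)) as [N hN]; [lra |].
  specialize (hN N (le_n N)). set (xn := proj1_sig s N) in *. set (pn := embed _ rho_is_metric xn) in *.
  specialize (h1 pn ltac:(lra)). rewrite (hp xn pn (fun _ => eq_refl) u hu) in h1.
  specialize (h2 (proj1_sig s) (proj1_sig pn) (proj2_sig s) (proj2_sig pn) ltac:(change (cdist (rho b c) s pn < d2); lra)).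
  rewrite (ext_pt u (proj1_sig pn) xn) in h2 by auto.
  pose proof (Cnorm_tri (proj1_sig (g s) u) (u xn) (ext u (proj1_sig s))).
  rewrite Cnorm_sym in h1. rewrite (Cnorm_sym (ext u _)) in h2. lra.
Qed.

Section InversePhi.
Variable x0 : X.

Definition point_of (phi : Kspace b c) : Compl (rho b c) :=
  proj1_sig (constructive_indefinite_description _ (character_is_point (proj1_sig phi) (proj2_sig phi) x0)).

Lemma point_of_spec phi u : InAplus b c u -> proj1_sig phi u = ext u (proj1_sig (point_of phi)).
Proof. unfold point_of. destruct constructive_indefinite_description; simpl; auto. Qed.

Lemma ext_cutoff z (s : nat -> X) : Cauchy (rho b c) s ->
  ext (cutoff z) s = (Rmin (seqdist (dmetric b) s (fun _ => z)) 1, 0).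
Proof.
  intros hs. apply Cv_Clim. split; simpl; [| apply cv_const].
  apply (cv_lip _ _ (fun a => Rmin a 1)); [| apply Rmin1_lip].
  apply (seqdist_cv _ dmetric_is_metric); [apply cauchy_rho_d; exact hs | apply const_cauchy, dmetric_is_metric].
Qed.

(* If p is within e of z and the cut-offs at z take e-close values at p and q,
   then q is within 3e of p (the truncation at 1 is harmless since e <= 1/2). *)
Lemma cutoff_close p q z e : Cauchy (dmetric b) p -> Cauchy (dmetric b) q -> 0 < e -> e <= 1 / 2 ->
  seqdist (dmetric b) p (fun _ => z) <= e ->
  Rabs (Rmin (seqdist (dmetric b) p (fun _ => z)) 1 - Rmin (seqdist (dmetric b) q (fun _ => z)) 1) < e ->
  seqdist (dmetric b) q p < 3 * e.
Proof.
  intros hp hq he he2 hpz hcut. pose proof (const_cauchy _ dmetric_is_metric z) as hz.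
  pose proof (seqdist_nonneg _ dmetric_is_metric _ _ hq hz).
  assert (seqdist (dmetric b) q (fun _ => z) < 2 * e).
  { revert hcut. unfold Rmin; repeat destruct Rle_dec; unfold Rabs; destruct Rcase_abs; lra. }
  pose proof (seqdist_tri _ dmetric_is_metric q (fun _ => z) p hq hz hp).
  rewrite (seqdist_sym _ dmetric_is_metric (fun _ => z) p hz hp) in H1. lra.
Qed.

(* The cut-offs separate points, so point_of (Phi a) represents a. *)
Lemma point_of_Phi a : ceq (rho b c) (point_of (Phi a)) a.
Proof.
  set (p := point_of (Phi a)).
  assert (hpd := cauchy_rho_d _ (proj2_sig p)). assert (had := cauchy_rho_d _ (proj2_sig a)).
  assert (hcut : forall z, Rmin (seqdist (dmetric b) (proj1_sig a) (fun _ => z)) 1 =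
                           Rmin (seqdist (dmetric b) (proj1_sig p) (fun _ => z)) 1).
  { intros z. pose proof (point_of_spec (Phi a) _ (cutoff_Aplus z)).
    change (ext (cutoff z) (proj1_sig a) = ext (cutoff z) (proj1_sig p)) in H.
    rewrite !ext_cutoff in H by apply proj2_sig. injection H; auto. }
  assert (hD : seqdist (dmetric b) (proj1_sig p) (proj1_sig a) = 0).
  { apply Rsmall_eq0; [apply (seqdist_nonneg _ dmetric_is_metric); auto |].
    intros e0 he0. set (e := Rmin (e0 / 3) (1 / 2)).
    assert (0 < e) by (unfold e, Rmin; destruct Rle_dec; lra).
    assert (e <= e0 / 3) by apply Rmin_l. assert (e <= 1 / 2) by apply Rmin_r.
    destruct (seqdist_density _ dmetric_is_metric (proj1_sig a) had e H) as [N hN].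
    specialize (hN N (le_n N)).
    assert (hc := cutoff_close (proj1_sig a) (proj1_sig p) (proj1_sig a N) e had hpd H H1 hN).
    rewrite hcut, Rminus_diag, Rabs_R0 in hc. specialize (hc H). lra. }
  unfold ceq, cdist. apply Rsmall_eq0; [apply (cdist_nonneg _ rho_is_metric) |].
  intros e he. left. apply seqdist_rho_small; auto. rewrite hD. nra.
Qed.

(* Characters close on the single cut-off at a far-out term z of P have points
   d-close, hence rho-close, to P. *)
Lemma point_of_cont : Continuous (Kopen b c) (copen (rho b c)) point_of.
Proof.
  intros V hV p hp. set (P := point_of p) in *. destruct (hV P hp) as [e [he h]].
  set (eta := Rmin (e * e / 3) (1 / 2)).
  assert (heta : 0 < eta) by (unfold eta, Rmin; destruct Rle_dec; nra).
  assert (eta <= e * e / 3) by apply Rmin_l. assert (eta <= 1 / 2) by apply Rmin_r.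
  assert (hPd := cauchy_rho_d _ (proj2_sig P)).
  destruct (seqdist_density _ dmetric_is_metric (proj1_sig P) hPd eta heta) as [N hN].
  specialize (hN N (le_n N)). set (z := proj1_sig P N) in *.
  exists (cutoff z :: nil), eta. split; auto. split; [intros a [<- | []]; apply cutoff_Aplus |].
  intros q hq. specialize (hq (cutoff z) (or_introl eq_refl)).
  rewrite (point_of_spec q _ (cutoff_Aplus z)), (point_of_spec p _ (cutoff_Aplus z)) in hq. fold P in hq.
  set (Q := point_of q) in *. assert (hQd := cauchy_rho_d _ (proj2_sig Q)).
  rewrite !ext_cutoff in hq by apply proj2_sig. unfold Csub in hq; simpl in hq.
  replace (0 - 0) with 0 in hq by ring. rewrite Cnorm_real, Rabs_minus_sym in hq.
  pose proof (cutoff_close (proj1_sig P) (proj1_sig Q) z eta hPd hQd heta H0 hN hq).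
  apply h. change (seqdist (rho b c) (proj1_sig P) (proj1_sig Q) < e).
  apply seqdist_rho_small; auto. rewrite (seqdist_sym _ dmetric_is_metric); auto. lra.
Qed.

Lemma Phi_homeo : Homeo (ceq (rho b c)) (Keq b c) (copen (rho b c)) (Kopen b c) Phi.
Proof.
  split; [apply Phi_cont |]. exists point_of. split; [apply point_of_cont |]. split.
  - apply point_of_Phi.
  - intros phi u hu. change (ext u (proj1_sig (point_of phi)) = proj1_sig phi u). rewrite point_of_spec; auto.
Qed.
End InversePhi.

End Energy.
End WeightedGraph.

Theorem mainTheorem20 (X : Type) (b : X -> X -> R) (c : X -> R)
  (HX : CountablyInfinite X) (Hg : WeightedGraph b c) (Hconn : Connected b)
  (Hc : Summable c) (Hb : Summable (invb b)) :
  CanonicallyCompactifiable b c /\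
  Compact (copen (dmetric b)) /\
  Compact (copen (rho b c)) /\
  (exists iota : Compl (dmetric b) -> Compl (rho b c),
     Continuous (copen (dmetric b)) (copen (rho b c)) iota /\
     (forall x s t, IsPointOf _ s x -> IsPointOf _ t x -> ceq _ (iota s) t) /\
     (forall g : Compl (dmetric b) -> Compl (rho b c),
        Continuous (copen (dmetric b)) (copen (rho b c)) g ->
        (forall x s t, IsPointOf _ s x -> IsPointOf _ t x -> ceq _ (g s) t) ->
        forall s, ceq _ (g s) (iota s)) /\
     Homeo (ceq (dmetric b)) (ceq (rho b c)) (copen (dmetric b)) (copen (rho b c)) iota) /\
  (exists Phi : Compl (rho b c) -> Kspace b c,
     Continuous (copen (rho b c)) (Kopen b c) Phi /\
     (forall x s, IsPointOf _ s x -> forall u, InAplus b c u -> proj1_sig (Phi s) u = u x) /\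
     (forall g : Compl (rho b c) -> Kspace b c,
        Continuous (copen (rho b c)) (Kopen b c) g ->
        (forall x s, IsPointOf _ s x -> forall u, InAplus b c u -> proj1_sig (g s) u = u x) ->
        forall s, Keq b c (g s) (Phi s)) /\
     Homeo (ceq (rho b c)) (Keq b c) (copen (rho b c)) (Kopen b c) Phi).
Proof.
  destruct HX as [enum _]. pose (x0 := enum 0%nat).
  destruct Hg as (bn & bs & _ & _ & cn).
  pose proof (dmetric_is_metric b bs Hconn) as d_metric.
  pose proof (rho_is_metric b bn bs Hconn c cn Hb) as rho_metric.
  split; [exact (canonically_compactifiable b bn bs Hconn c cn Hb x0) |].
  split; [exact (completion_compact _ d_metric x0 (dmetric_totally_bounded b bs Hconn x0 Hb)) |].
  split; [exact (completion_compact _ rho_metric x0 (rho_totally_bounded b bn bs Hconn c cn Hb x0)) |].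
  split.
  - exists (iota b bn bs Hconn c cn Hb).
    split; [apply iota_cont |]. split; [apply iota_points |].
    split; [apply iota_unique | apply iota_homeo; exact Hc].
  - exists (Phi b bn bs Hconn c cn Hb).
    split; [apply Phi_cont |]. split; [apply Phi_points |].
    split; [apply Phi_unique | exact (Phi_homeo b bn bs Hconn c cn Hb Hc x0)].
Qed.
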